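(* Let $\Sigma$ be a signature and $G=(G,\sigma,\theta):\mathcal F_\Sigma\to\mathcal C$ a cwf morphism (under the standing assumptions below). Let $S$ be a type symbol not declared in $\Sigma$ and $\Gamma_S$ a precontext with ($\Gamma_S$ context)$\in\mathcal J(\Sigma)$, so that $\Sigma'=\Sigma\cup\{(\Gamma_S,S)\}$ is a signature. Then for every $A\in\mathrm{Ty}_{\mathcal C}(G(\Gamma_S))$ there is a unique cwf morphism $G'=(G',\sigma',\theta'):\mathcal F_{\Sigma'}\to\mathcal C$ with $G'\circ E=G$ and $\sigma'(\Gamma_S,S(\mathrm{OV}(\Gamma_S)))=A$, where $E:\mathcal F_\Sigma\to\mathcal F_{\Sigma'}$ is the canonical embedding.
   Context: Standing assumptions: the variable set is $V=\{1,2,3,\ldots\}$ with $\mathsf{fr}(X)=\max(\{1\}\cup\{x+1:x\in X\})$ and $\varphi(X)=\{\mathsf{fr}(X)\}$ for finite $X\subseteq V$; all declarations of signatures are on standard form, written $(\Gamma,S)$ (type) and $(\Gamma,f,U)$ (function). Preelements are terms built from variables and function symbols; a pretype is $S(t_1,\ldots,t_n)$ with $S$ a type symbol and $t_i$ preelements; $\mathrm{V}(E)$ is the set of variables of $E$; $E[\bar a/\bar x]$ is simultaneous substitution. A precontext is $\Gamma=x_1:A_1,\ldots,x_n:A_n$ with $x_k=\mathsf{fr}(\{x_1,\ldots,x_{k-1}\})$ and $\mathrm{V}(A_k)\subseteq\{x_1,\ldots,x_{k-1}\}$; $\mathrm{OV}(\Gamma)=x_1,\ldots,x_n$; $\mathrm{fresh}(\Gamma)=\mathsf{fr}(\{x_1,\ldots,x_n\})$;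 $E[\bar a/\Gamma]=E[\bar a/x_1,\ldots,x_n]$. A presignature is a set of declarations $(\Gamma,S)$ ($S$ a type symbol) and $(\Gamma,f,U)$ ($f$ a function symbol, $U$ a pretype with $\mathrm{V}(U)\subseteq\mathrm{V}(\Gamma)$), each symbol declared at most once. $\mathcal{J}(\Sigma)$ is the smallest set of judgements (''$\Gamma$ context'', ''$A$ type $(\Gamma)$'', ''$a:A\ (\Gamma)$'') closed under: (R1) $\langle\rangle$ context; (R2) from $\Gamma$ context and $A$ type $(\Gamma)$ infer $\Gamma,\mathrm{fresh}(\Gamma):A$ context; (R3) from $x_1:A_1,\ldots,x_n:A_n$ context infer $x_i:A_i\ (x_1:A_1,\ldots,x_n:A_n)$; (R4) if $(\Gamma,S)\in\Sigma$ and $\bar a:\Delta\to\Gamma$ infer $S(\bar a)$ type $(\Delta)$; (R5) if $(\Gamma,f,U)\in\Sigma$, $\bar a:\Delta\to\Gamma$ and $U[\bar a/\Gamma]$ type $(\Delta)$ infer $f(\bar a):U[\bar a/\Gamma]\ (\Delta)$; where, for $\Gamma=x_1:A_1,\ldots,x_n:A_n$, ''$\bar a:\Delta\to\Gamma$'' abbreviates the judgements $\Delta$ context, $\Gamma$ context, $a_k:A_k[a_1,\ldots,a_{k-1}/x_1,\ldots,x_{k-1}]\ (\Delta)$ ($k=1,\ldots,n$). $\Sigma$ is a signature if ($\Gamma$ context)$\in\mathcal{J}(\Sigma)$ for $(\Gamma,S)\in\Sigma$ and ($U$ type $(\Gamma)$)$\in\mathcal{J}(\Sigma)$ for $(\Gamma,f,U)\in\Sigma$.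 A category with families (cwf) consists of: a category $\mathcal C$ with a terminal object $\top$; for each object $\Gamma$ a class $\mathrm{Ty}(\Gamma)$, and for $f:\Delta\to\Gamma$ a function $A\mapsto A\{f\}:\mathrm{Ty}(\Gamma)\to\mathrm{Ty}(\Delta)$ with $A\{1\}=A$, $A\{f\circ g\}=A\{f\}\{g\}$; for $A\in\mathrm{Ty}(\Gamma)$ an object $\Gamma.A$ and a morphism $\mathrm{p}(A)=\mathrm{p}_\Gamma(A):\Gamma.A\to\Gamma$; for $A\in\mathrm{Ty}(\Gamma)$ a class $\mathrm{Tm}(\Gamma,A)$ and for $f:\Delta\to\Gamma$ a function $a\mapsto a\{f\}:\mathrm{Tm}(\Gamma,A)\to\mathrm{Tm}(\Delta,A\{f\})$ with $a\{1\}=a$, $a\{f\circ g\}=a\{f\}\{g\}$; for each $A\in\mathrm{Ty}(\Gamma)$ an element $\mathrm{v}_A\in\mathrm{Tm}(\Gamma.A,A\{\mathrm{p}(A)\})$; for $f:\Delta\to\Gamma$ and $a\in\mathrm{Tm}(\Delta,A\{f\})$ a morphism $\langle f,a\rangle_A:\Delta\to\Gamma.A$ such that $\mathrm{p}(A)\circ\langle f,a\rangle_A=f$, $\mathrm{v}_A\{\langle f,a\rangle_A\}=a$, $\langle\mathrm{p}(A)\circ h,\mathrm{v}_A\{h\}\rangle_A=h$ for every $h:\Delta\to\Gamma.A$, and $\langle f,a\rangle_A\circ g=\langle f\circ g,a\{g\}\rangle_A$. A cwf morphism $(F,\sigma,\theta):\mathcal C\to\mathcal C'$ consists of a functor $F$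 with $F(\top)=\top'$; functions $\sigma_\Gamma:\mathrm{Ty}(\Gamma)\to\mathrm{Ty}'(F\Gamma)$ with $\sigma_\Delta(A\{f\})=\sigma_\Gamma(A)\{Ff\}$ for $f:\Delta\to\Gamma$, such that $F(\Gamma.A)=F\Gamma.\sigma_\Gamma(A)$ and $F(\mathrm{p}_\Gamma(A))=\mathrm{p}_{F\Gamma}(\sigma_\Gamma(A))$; and functions $\theta_{\Gamma,A}:\mathrm{Tm}(\Gamma,A)\to\mathrm{Tm}'(F\Gamma,\sigma_\Gamma(A))$ with $\theta_{\Delta,A\{f\}}(a\{f\})=\theta_{\Gamma,A}(a)\{Ff\}$, $\theta_{\Gamma.A,A\{\mathrm{p}(A)\}}(\mathrm{v}_A)=\mathrm{v}_{\sigma_\Gamma(A)}$, and $F(\langle f,a\rangle_A)=\langle Ff,\theta_{\Delta,A\{f\}}(a)\rangle_{\sigma_\Gamma(A)}$ for $f:\Delta\to\Gamma$, $a\in\mathrm{Tm}(\Delta,A\{f\})$. The cwf $\mathcal F_\Sigma$: objects are precontexts $\Gamma$ with ($\Gamma$ context)$\in\mathcal{J}(\Sigma)$; morphisms $\Delta\to\Gamma$ are triples $(\Delta,\Gamma,\bar a)$ with $\bar a:\Delta\to\Gamma$ a context map in $\mathcal{J}(\Sigma)$; composition $(\Gamma,\Theta,\bar t)\circ(\Delta,\Gamma,\bar s)=(\Delta,\Theta,(t_1[\bar s/\Gamma],\ldots,t_k[\bar s/\Gamma]))$; identity $(\Gamma,\Gamma,\mathrm{OV}(\Gamma))$; terminal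 object $\langle\rangle$. $\mathrm{Ty}(\Gamma)=\{(\Gamma,A): (A\text{ type }(\Gamma))\in\mathcal{J}(\Sigma)\}$ with $(\Gamma,A)\{(\Delta,\Gamma,\bar a)\}=(\Delta,A[\bar a/\Gamma])$; $\mathrm{Tm}(\Gamma,(\Gamma,A))=\{((\Gamma,A),a): (a:A\ (\Gamma))\in\mathcal{J}(\Sigma)\}$ with $((\Gamma,A),a)\{(\Delta,\Gamma,\bar a)\}=((\Delta,A[\bar a/\Gamma]),a[\bar a/\Gamma])$; for $\mathrm S=(\Gamma,S)$: $\Gamma.\mathrm S=\langle\Gamma,\mathrm{fresh}(\Gamma):S\rangle$, $\mathrm{p}_\Gamma(\mathrm S)=(\Gamma.\mathrm S,\Gamma,\mathrm{OV}(\Gamma))$, $\mathrm{v}_{\mathrm S}=((\Gamma.\mathrm S,S),\mathrm{fresh}(\Gamma))$, $\langle(\Delta,\Gamma,\bar s),((\Delta,S[\bar s/\Gamma]),b)\rangle_{\mathrm S}=(\Delta,\Gamma.\mathrm S,(\bar s,b))$. For a cwf morphism $(F,\sigma,\theta)$ out of $\mathcal F_\Sigma$ write $\sigma(\Gamma,A)$ for $\sigma_\Gamma((\Gamma,A))$ and $\theta(\Gamma,A,a)$ for $\theta_{\Gamma,(\Gamma,A)}(((\Gamma,A),a))$. For signatures $\Sigma\subseteq\Sigma'$, the canonical embedding $E:\mathcal F_\Sigma\to\mathcal F_{\Sigma'}$ is the cwf morphism which is the identity on objects, morphisms, types and terms. *)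

From Stdlib Require Import List Arith Lia ProofIrrelevance.
Import ListNotations.

Inductive tm : Type := Var (n : nat) | App (f : nat) (args : list tm).
Record pty : Type := PTy { tsym : nat; targs : list tm }.
Definition ctx := list pty.
Inductive Decl : Type :=
| DTy (Γ : ctx) (S : nat)
| DFun (Γ : ctx) (f : nat) (U : pty).

Fixpoint subst (s : list tm) (t : tm) : tm :=
  match t with
  | Var n => nth n s (Var n)
  | App f l => App f (map (subst s) l)
  end.
Definition subst_ty (s : list tm) (A : pty) : pty := PTy (tsym A) (map (subst s) (targs A)).
Definition dty : pty := PTy 0 [].

Inductive Ctx (Σ : Decl -> Prop) : ctx -> Prop :=
| ctx_nil : Ctx Σ []
| ctx_ext : forall Γ A, Ctx Σ Γ -> IsTy Σ Γ A -> Ctx Σ (Γ ++ [A])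
with IsTy (Σ : Decl -> Prop) : ctx -> pty -> Prop :=
| ty_decl : forall Γ S Δ a, Σ (DTy Γ S) -> Ctx Σ Δ -> Ctx Σ Γ -> length a = length Γ ->
    (forall k, k < length Γ -> HasTy Σ Δ (nth k a (Var 0)) (subst_ty (firstn k a) (nth k Γ dty))) ->
    IsTy Σ Δ (PTy S a)
with HasTy (Σ : Decl -> Prop) : ctx -> tm -> pty -> Prop :=
| tm_var : forall Γ i, Ctx Σ Γ -> i < length Γ -> HasTy Σ Γ (Var i) (nth i Γ dty)
| tm_decl : forall Γ f U Δ a, Σ (DFun Γ f U) -> Ctx Σ Δ -> Ctx Σ Γ -> length a = length Γ ->
    (forall k, k < length Γ -> HasTy Σ Δ (nth k a (Var 0)) (subst_ty (firstn k a) (nth k Γ dty))) ->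
    IsTy Σ Δ (subst_ty a U) ->
    HasTy Σ Δ (App f a) (subst_ty a U).

Scheme Ctx_mut := Minimality for Ctx Sort Prop
with IsTy_mut := Minimality for IsTy Sort Prop
with HasTy_mut := Minimality for HasTy Sort Prop.
Combined Scheme J_mut from Ctx_mut, IsTy_mut, HasTy_mut.

Fixpoint tm_ind' (P : tm -> Prop) (hv : forall n, P (Var n))
  (ha : forall f l, (forall x, In x l -> P x) -> P (App f l)) (t : tm) {struct t} : P t :=
  match t with
  | Var n => hv n
  | App f l => ha f l ((fix go (l : list tm) : forall x, In x l -> P x :=
        match l with
        | [] => fun x H => False_ind _ H
        | y :: r => fun x H => match H with
                               | or_introl e => eq_ind y P (tm_ind' P hv ha y) x e
                               | or_intror H' => go r x H'
                               end
        end) l)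
  end.

Fixpoint tsc (n : nat) (t : tm) : Prop :=
  match t with
  | Var m => m < n
  | App _ l => (fix go (l : list tm) : Prop :=
                  match l with [] => True | x :: r => tsc n x /\ go r end) l
  end.
Definition tysc (n : nat) (A : pty) : Prop := forall t, In t (targs A) -> tsc n t.
Definition precontext (Γ : ctx) : Prop := forall k, k < length Γ -> tysc k (nth k Γ dty).

Lemma tsc_App n f l : tsc n (App f l) <-> (forall x, In x l -> tsc n x).
Proof.
  simpl. induction l as [|y r IH]; simpl; [tauto|].
  split.
  - intros [H1 H2] x [<-|Hx]; auto. apply IH; auto.
  - intros H; split; auto. apply IH; auto.
Qed.

Definition idl (n : nat) : list tm := map Var (seq 0 n).

Lemma nth_map_lt {A B} (f : A -> B) l k d d' : k < length l -> nth k (map f l) d = f (nth k l d').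
Proof.
  intros Hk. rewrite (nth_indep _ d (f d')) by (rewrite length_map; auto). apply map_nth.
Qed.

Lemma length_idl n : length (idl n) = n.
Proof. unfold idl. rewrite length_map, length_seq. reflexivity. Qed.

Lemma nth_idl n k d : k < n -> nth k (idl n) d = Var k.
Proof. intros Hk. unfold idl. rewrite (nth_map_lt _ _ _ _ 0) by (rewrite length_seq; auto).
  rewrite seq_nth; auto. Qed.

Lemma subst_idl n t : subst (idl n) t = t.
Proof.
  induction t as [m|f l IH] using tm_ind'; simpl.
  - destruct (Nat.lt_ge_cases m n).
    + apply nth_idl; auto.
    + apply nth_overflow. rewrite length_idl; auto.
  - f_equal. rewrite <- (map_id l) at 2. apply map_ext_in. auto.
Qed.

Lemma subst_ty_idl n A : subst_ty (idl n) A = A.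
Proof. destruct A as [S l]. unfold subst_ty; simpl. f_equal.
  rewrite <- (map_id l) at 2. apply map_ext_in. intros; apply subst_idl. Qed.

Lemma subst_comp s r t : tsc (length s) t -> subst r (subst s t) = subst (map (subst r) s) t.
Proof.
  induction t as [m|f l IH] using tm_ind'.
  - simpl. intros Hm. symmetry. apply (nth_map_lt _ _ _ _ (Var m)); auto.
  - intros H. rewrite tsc_App in H. simpl. f_equal. rewrite map_map. apply map_ext_in. auto.
Qed.

Lemma subst_ty_comp s r A : tysc (length s) A -> subst_ty r (subst_ty s A) = subst_ty (map (subst r) s) A.
Proof. destruct A as [S l]; unfold tysc, subst_ty; simpl; intros H. f_equal.
  rewrite map_map. apply map_ext_in. intros; apply subst_comp; auto. Qed.

Lemma subst_prefix k s t : tsc k t -> subst (firstn k s) t = subst s t.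
Proof.
  induction t as [m|f l IH] using tm_ind'.
  - simpl. intros Hm. rewrite nth_firstn. apply Nat.ltb_lt in Hm. rewrite Hm. reflexivity.
  - intros H. rewrite tsc_App in H. simpl. f_equal. apply map_ext_in. auto.
Qed.

Lemma subst_ty_prefix k s A : tysc k A -> subst_ty (firstn k s) A = subst_ty s A.
Proof. destruct A as [S l]; unfold tysc, subst_ty; simpl; intros H. f_equal.
  apply map_ext_in. intros; apply subst_prefix; auto. Qed.

Lemma tsc_mono n n' t : tsc n t -> n <= n' -> tsc n' t.
Proof.
  induction t as [m|f l IH] using tm_ind'.
  - simpl. lia.
  - intros H Hle. rewrite tsc_App in *. intros x Hx. apply IH; auto.
Qed.

Lemma tysc_mono n n' A : tysc n A -> n <= n' -> tysc n' A.
Proof. unfold tysc; intros; eapply tsc_mono; eauto. Qed.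

Lemma IsTy_ctx Σ Γ A : IsTy Σ Γ A -> Ctx Σ Γ.
Proof. destruct 1; auto. Qed.
Lemma HasTy_ctx Σ Γ t A : HasTy Σ Γ t A -> Ctx Σ Γ.
Proof. destruct 1; auto. Qed.

Lemma nth_app_last {A} (l : list A) x d k : k < length l -> nth k (l ++ [x]) d = nth k l d.
Proof. intros; apply app_nth1; auto. Qed.
Lemma nth_app_last' {A} (l : list A) x d : nth (length l) (l ++ [x]) d = x.
Proof. rewrite app_nth2 by lia. rewrite Nat.sub_diag. reflexivity. Qed.

Lemma J_scoped Σ :
  (forall Γ, Ctx Σ Γ -> precontext Γ) /\
  (forall Γ A, IsTy Σ Γ A -> tysc (length Γ) A) /\
  (forall Γ t A, HasTy Σ Γ t A -> tsc (length Γ) t /\ tysc (length Γ) A).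
Proof.
  apply J_mut.
  - intros k Hk; simpl in Hk; lia.
  - intros Γ A _ HΓ _ HA k Hk. rewrite length_app in Hk; simpl in Hk.
    destruct (Nat.lt_ge_cases k (length Γ)).
    + rewrite nth_app_last by auto. apply HΓ; auto.
    + assert (k = length Γ) by lia. subst k. rewrite nth_app_last'. auto.
  - intros Γ S Δ a _ _ _ _ _ Hlen _ IH t Ht. simpl in Ht.
    destruct (In_nth a t (Var 0) Ht) as [k [Hk <-]]. apply IH. lia.
  - intros Γ i _ HΓ Hi. split; simpl; auto.
    eapply tysc_mono; [apply HΓ; auto| lia].
  - intros Γ f U Δ a _ _ _ _ _ Hlen _ IH _ HU. split; auto.
    apply tsc_App. intros x Hx. destruct (In_nth a x (Var 0) Hx) as [k [Hk <-]]. apply IH. lia.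
Qed.

Lemma Ctx_pre Σ Γ : Ctx Σ Γ -> precontext Γ.
Proof. apply J_scoped. Qed.
Lemma IsTy_sc Σ Γ A : IsTy Σ Γ A -> tysc (length Γ) A.
Proof. apply J_scoped. Qed.
Lemma HasTy_sc Σ Γ t A : HasTy Σ Γ t A -> tsc (length Γ) t.
Proof. apply J_scoped. Qed.

(** context maps [a : Δ → Γ] (the two context judgements are kept separately) *)
Definition ctxmap (Σ : Decl -> Prop) (Δ Γ : ctx) (a : list tm) : Prop :=
  length a = length Γ /\
  forall k, k < length Γ -> HasTy Σ Δ (nth k a (Var 0)) (subst_ty (firstn k a) (nth k Γ dty)).

Lemma ctxmap_comp_core Σ X Z (g f : list tm) :
  precontext Z -> length g = length Z ->
  (forall k, k < length Z -> HasTy Σ X (subst f (nth k g (Var 0))) (subst_ty f (subst_ty (firstn k g) (nth k Z dty)))) ->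
  ctxmap Σ X Z (map (subst f) g).
Proof.
  intros HZ Hlen H. split; [rewrite length_map; auto|].
  intros k Hk. rewrite (nth_map_lt _ _ _ _ (Var 0)) by lia.
  rewrite firstn_map. rewrite <- subst_ty_comp. 2:{ rewrite length_firstn. eapply tysc_mono; [apply HZ; auto| lia]. }
  apply H; auto.
Qed.

Definition fun_scoped (Σ : Decl -> Prop) : Prop :=
  forall Γ f U, Σ (DFun Γ f U) -> tysc (length Γ) U.

Lemma J_subst Σ (HΣ : fun_scoped Σ) :
  (forall Γ, Ctx Σ Γ -> True) /\
  (forall Γ A, IsTy Σ Γ A -> forall Δ a, Ctx Σ Δ -> ctxmap Σ Δ Γ a -> IsTy Σ Δ (subst_ty a A)) /\
  (forall Γ t A, HasTy Σ Γ t A -> forall Δ a, Ctx Σ Δ -> ctxmap Σ Δ Γ a -> HasTy Σ Δ (subst a t) (subst_ty a A)).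
Proof.
  apply J_mut; auto.
  - intros Γ0 S Γ b Hd HΓ _ HΓ0 _ Hlen Hb IH Δ a HΔ Ha.
    destruct (ctxmap_comp_core Σ Δ Γ0 b a (Ctx_pre _ _ HΓ0) Hlen) as [H1 H2].
    { intros k Hk. apply IH; auto. }
    unfold subst_ty at 1; simpl. eapply ty_decl; eauto.
  - intros Γ i HΓ _ Hi Δ a HΔ [Hlen Ha].
    simpl. rewrite (nth_indep _ _ (Var 0)) by lia.
    rewrite <- (subst_ty_prefix i) by (apply (Ctx_pre _ _ HΓ); auto). apply Ha; auto.
  - intros Γ0 f U Γ b Hd HΓ _ HΓ0 _ Hlen Hb IH HU IHU Δ a HΔ Ha.
    destruct (ctxmap_comp_core Σ Δ Γ0 b a (Ctx_pre _ _ HΓ0) Hlen) as [H1 H2].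
    { intros k Hk. apply IH; auto. }
    simpl. rewrite subst_ty_comp by (rewrite Hlen; eapply HΣ; eauto).
    eapply tm_decl; eauto. rewrite <- subst_ty_comp by (rewrite Hlen; eapply HΣ; eauto). auto.
Qed.

Lemma IsTy_subst Σ (HΣ : fun_scoped Σ) Γ A Δ a :
  IsTy Σ Γ A -> Ctx Σ Δ -> ctxmap Σ Δ Γ a -> IsTy Σ Δ (subst_ty a A).
Proof. intros; eapply J_subst; eauto. Qed.
Lemma HasTy_subst Σ (HΣ : fun_scoped Σ) Γ t A Δ a :
  HasTy Σ Γ t A -> Ctx Σ Δ -> ctxmap Σ Δ Γ a -> HasTy Σ Δ (subst a t) (subst_ty a A).
Proof. intros; eapply J_subst; eauto. Qed.

Lemma ctxmap_comp Σ (HΣ : fun_scoped Σ) X Y Z g f :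
  Ctx Σ X -> Ctx Σ Z -> ctxmap Σ Y Z g -> ctxmap Σ X Y f -> ctxmap Σ X Z (map (subst f) g).
Proof.
  intros HX HZ [Hl Hg] Hf. apply ctxmap_comp_core; auto. eapply Ctx_pre; eauto.
  intros k Hk. eapply HasTy_subst; eauto.
Qed.

Lemma ctxmap_idl Σ Γ E : Ctx Σ (Γ ++ E) -> ctxmap Σ (Γ ++ E) Γ (idl (length Γ)).
Proof.
  intros H. split; [apply length_idl|]. intros k Hk.
  rewrite nth_idl by auto.
  assert (Hpre := Ctx_pre _ _ H).
  assert (Hk' : k < length (Γ ++ E)) by (rewrite length_app; lia).
  assert (Hn : nth k (Γ ++ E) dty = nth k Γ dty) by (apply app_nth1; auto).
  rewrite subst_ty_prefix.
  - rewrite subst_ty_idl, <- Hn. apply tm_var; auto.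
  - rewrite <- Hn. apply Hpre; auto.
Qed.

Lemma ctxmap_id Σ Γ : Ctx Σ Γ -> ctxmap Σ Γ Γ (idl (length Γ)).
Proof. intros H. pose proof (ctxmap_idl Σ Γ []) as K. rewrite app_nil_r in K. auto. Qed.

Lemma ctxmap_snoc Σ Δ Γ A f a :
  ctxmap Σ Δ Γ f -> HasTy Σ Δ a (subst_ty f A) -> ctxmap Σ Δ (Γ ++ [A]) (f ++ [a]).
Proof.
  intros [Hl Hf] Ha. split; [rewrite !length_app; simpl; lia|].
  intros k Hk. rewrite length_app in Hk; simpl in Hk.
  destruct (Nat.lt_ge_cases k (length Γ)).
  - rewrite !nth_app_last by lia. rewrite firstn_app. replace (k - length f) with 0 by lia.
    simpl. rewrite app_nil_r. auto.
  - assert (k = length Γ) by lia. subst k. rewrite <- Hl at 1. rewrite nth_app_last'.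
    rewrite nth_app_last'. rewrite firstn_app. rewrite <- Hl, Nat.sub_diag. simpl.
    rewrite app_nil_r, firstn_all. auto.
Qed.

Record Cwf : Type := {
  Ob : Type;
  Hom : Ob -> Ob -> Type;
  comp : forall X Y Z : Ob, Hom Y Z -> Hom X Y -> Hom X Z;
  idm : forall X : Ob, Hom X X;
  comp_assoc : forall W X Y Z (h : Hom Y Z) (g : Hom X Y) (f : Hom W X),
      comp W Y Z h (comp W X Y g f) = comp W X Z (comp X Y Z h g) f;
  comp_id_l : forall X Y (f : Hom X Y), comp X Y Y (idm Y) f = f;
  comp_id_r : forall X Y (f : Hom X Y), comp X X Y f (idm X) = f;
  top : Ob;
  bang : forall X, Hom X top;
  bang_unique : forall X (f : Hom X top), f = bang X;
  Ty : Ob -> Type;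
  tysub : forall Δ Γ, Ty Γ -> Hom Δ Γ -> Ty Δ;
  tysub_id : forall Γ (A : Ty Γ), tysub Γ Γ A (idm Γ) = A;
  tysub_comp : forall Θ Δ Γ (A : Ty Γ) (f : Hom Δ Γ) (g : Hom Θ Δ),
      tysub Θ Γ A (comp Θ Δ Γ f g) = tysub Θ Δ (tysub Δ Γ A f) g;
  ext : forall Γ, Ty Γ -> Ob;
  pr : forall Γ (A : Ty Γ), Hom (ext Γ A) Γ;
  Tm : forall Γ, Ty Γ -> Type;
  tmsub : forall Δ Γ (A : Ty Γ), Tm Γ A -> forall f : Hom Δ Γ, Tm Δ (tysub Δ Γ A f);
  tmsub_id : forall Γ A (a : Tm Γ A),
      existT (Tm Γ) (tysub Γ Γ A (idm Γ)) (tmsub Γ Γ A a (idm Γ)) = existT (Tm Γ) A a;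
  tmsub_comp : forall Θ Δ Γ A (a : Tm Γ A) (f : Hom Δ Γ) (g : Hom Θ Δ),
      existT (Tm Θ) _ (tmsub Θ Γ A a (comp Θ Δ Γ f g))
      = existT (Tm Θ) _ (tmsub Θ Δ _ (tmsub Δ Γ A a f) g);
  var : forall Γ (A : Ty Γ), Tm (ext Γ A) (tysub (ext Γ A) Γ A (pr Γ A));
  pair : forall Δ Γ (A : Ty Γ) (f : Hom Δ Γ), Tm Δ (tysub Δ Γ A f) -> Hom Δ (ext Γ A);
  pr_pair : forall Δ Γ A f a, comp Δ (ext Γ A) Γ (pr Γ A) (pair Δ Γ A f a) = f;
  var_pair : forall Δ Γ A f a,
      existT (Tm Δ) _ (tmsub Δ (ext Γ A) _ (var Γ A) (pair Δ Γ A f a)) = existT (Tm Δ) _ a;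
  pair_eta : forall Δ Γ A (h : Hom Δ (ext Γ A)),
      pair Δ Γ A (comp Δ (ext Γ A) Γ (pr Γ A) h)
        (eq_rect _ (Tm Δ) (tmsub Δ (ext Γ A) _ (var Γ A) h) _
           (eq_sym (tysub_comp Δ (ext Γ A) Γ A (pr Γ A) h))) = h;
  pair_comp : forall Θ Δ Γ A (f : Hom Δ Γ) (a : Tm Δ (tysub Δ Γ A f)) (g : Hom Θ Δ),
      comp Θ Δ (ext Γ A) (pair Δ Γ A f a) g
      = pair Θ Γ A (comp Θ Δ Γ f g)
          (eq_rect _ (Tm Θ) (tmsub Θ Δ _ a g) _ (eq_sym (tysub_comp Θ Δ Γ A f g)))
}.

Record CwfMor (C D : Cwf) : Type := {
  Fo : Ob C -> Ob D;
  Fh : forall X Y, Hom C X Y -> Hom D (Fo X) (Fo Y);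
  F_id : forall X, Fh X X (idm C X) = idm D (Fo X);
  F_comp : forall X Y Z (g : Hom C Y Z) (f : Hom C X Y),
      Fh X Z (comp C X Y Z g f) = comp D _ _ _ (Fh Y Z g) (Fh X Y f);
  F_top : Fo (top C) = top D;
  sg : forall Γ, Ty C Γ -> Ty D (Fo Γ);
  sg_sub : forall Δ Γ (A : Ty C Γ) (f : Hom C Δ Γ),
      sg Δ (tysub C Δ Γ A f) = tysub D _ _ (sg Γ A) (Fh Δ Γ f);
  F_ext : forall Γ A, Fo (ext C Γ A) = ext D (Fo Γ) (sg Γ A);
  F_pr : forall Γ A,
      existT (fun X => Hom D X (Fo Γ)) (Fo (ext C Γ A)) (Fh _ _ (pr C Γ A))
      = existT (fun X => Hom D X (Fo Γ)) (ext D (Fo Γ) (sg Γ A)) (pr D (Fo Γ) (sg Γ A));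
  th : forall Γ A, Tm C Γ A -> Tm D (Fo Γ) (sg Γ A);
  th_sub : forall Δ Γ A (a : Tm C Γ A) (f : Hom C Δ Γ),
      existT (Tm D (Fo Δ)) _ (th Δ _ (tmsub C Δ Γ A a f))
      = existT (Tm D (Fo Δ)) _ (tmsub D _ _ _ (th Γ A a) (Fh Δ Γ f));
  th_var : forall Γ A,
      existT (fun X => {T : Ty D X & Tm D X T}) (Fo (ext C Γ A))
             (existT (Tm D (Fo (ext C Γ A))) _ (th _ _ (var C Γ A)))
      = existT (fun X => {T : Ty D X & Tm D X T}) (ext D (Fo Γ) (sg Γ A))
             (existT (Tm D (ext D (Fo Γ) (sg Γ A))) _ (var D (Fo Γ) (sg Γ A)));
  F_pair : forall Δ Γ A (f : Hom C Δ Γ) (a : Tm C Δ (tysub C Δ Γ A f)),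
      existT (fun X => Hom D (Fo Δ) X) (Fo (ext C Γ A)) (Fh _ _ (pair C Δ Γ A f a))
      = existT (fun X => Hom D (Fo Δ) X) (ext D (Fo Γ) (sg Γ A))
          (pair D _ _ (sg Γ A) (Fh Δ Γ f)
             (eq_rect _ (Tm D (Fo Δ)) (th Δ _ a) _ (sg_sub Δ Γ A f)))
}.

Lemma sig_ext {A : Type} {P : A -> Prop} (x y : sig P) : proj1_sig x = proj1_sig y -> x = y.
Proof. destruct x as [x Hx], y as [y Hy]; simpl; intros ->. f_equal. apply proof_irrelevance. Qed.

Lemma ctxmap_sc Σ Δ Γ a : ctxmap Σ Δ Γ a -> forall t, In t a -> tsc (length Δ) t.
Proof. intros [Hl H] t Ht. destruct (In_nth a t (Var 0) Ht) as [k [Hk <-]].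
  eapply HasTy_sc. apply H. lia. Qed.

Lemma map_subst_idl s n : n <= length s -> map (subst s) (idl n) = firstn n s.
Proof.
  intros Hn. apply (nth_ext _ _ (Var 0) (Var 0)).
  - rewrite length_map, length_idl, length_firstn. lia.
  - intros k Hk. rewrite length_map, length_idl in Hk.
    rewrite (nth_map_lt _ _ _ _ (Var 0)) by (rewrite length_idl; auto).
    rewrite nth_idl by auto. simpl. rewrite nth_firstn.
    replace (k <? n) with true by (symmetry; apply Nat.ltb_lt; auto).
    apply nth_indep. lia.
Qed.

Lemma firstn_snoc {A} (f : list A) a : firstn (length f) (f ++ [a]) = f.
Proof. rewrite firstn_app, Nat.sub_diag, firstn_all. simpl. apply app_nil_r. Qed.

Lemma firstn_last {A} (h : list A) n d : length h = S n -> firstn n h ++ [nth n h d] = h.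
Proof.
  intros Hl. rewrite <- (firstn_skipn n h) at 3. f_equal.
  assert (Hs : length (skipn n h) = 1) by (rewrite length_skipn; lia).
  destruct (skipn n h) as [|x [|y r]] eqn:E; simpl in Hs; try lia.
  rewrite <- (firstn_skipn n h) at 1. rewrite app_nth2; rewrite length_firstn; [|lia].
  replace (n - Init.Nat.min n (length h)) with 0 by lia. rewrite E. reflexivity.
Qed.

Section FSig.
Variable Σ : Decl -> Prop.
Variable HΣ : fun_scoped Σ.

Definition FOb : Type := {Γ : ctx | Ctx Σ Γ}.
Definition FHom (Δ Γ : FOb) : Type := {a : list tm | ctxmap Σ (proj1_sig Δ) (proj1_sig Γ) a}.
Definition Fcomp (X Y Z : FOb) (g : FHom Y Z) (f : FHom X Y) : FHom X Z :=
  exist _ (map (subst (proj1_sig f)) (proj1_sig g))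
    (ctxmap_comp Σ HΣ _ _ _ _ _ (proj2_sig X) (proj2_sig Z) (proj2_sig g) (proj2_sig f)).
Definition Fidm (X : FOb) : FHom X X :=
  exist _ (idl (length (proj1_sig X))) (ctxmap_id Σ _ (proj2_sig X)).
Definition Ftop : FOb := exist _ [] (ctx_nil Σ).
Lemma ctxmap_nil Δ : ctxmap Σ Δ [] [].
Proof. split; auto. intros k Hk; simpl in Hk; lia. Qed.
Definition Fbang (X : FOb) : FHom X Ftop := exist _ [] (ctxmap_nil _).
Definition FTy (Γ : FOb) : Type := {A : pty | IsTy Σ (proj1_sig Γ) A}.
Definition Ftysub (Δ Γ : FOb) (A : FTy Γ) (f : FHom Δ Γ) : FTy Δ :=
  exist _ (subst_ty (proj1_sig f) (proj1_sig A))
    (IsTy_subst Σ HΣ _ _ _ _ (proj2_sig A) (proj2_sig Δ) (proj2_sig f)).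
Definition Fext (Γ : FOb) (A : FTy Γ) : FOb :=
  exist _ (proj1_sig Γ ++ [proj1_sig A]) (ctx_ext Σ _ _ (proj2_sig Γ) (proj2_sig A)).
Definition Fpr (Γ : FOb) (A : FTy Γ) : FHom (Fext Γ A) Γ :=
  exist _ (idl (length (proj1_sig Γ))) (ctxmap_idl Σ _ _ (proj2_sig (Fext Γ A))).
Definition FTm (Γ : FOb) (A : FTy Γ) : Type := {t : tm | HasTy Σ (proj1_sig Γ) t (proj1_sig A)}.
Definition Ftmsub (Δ Γ : FOb) (A : FTy Γ) (a : FTm Γ A) (f : FHom Δ Γ) : FTm Δ (Ftysub Δ Γ A f) :=
  exist _ (subst (proj1_sig f) (proj1_sig a))
    (HasTy_subst Σ HΣ _ _ _ _ _ (proj2_sig a) (proj2_sig Δ) (proj2_sig f)).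
Lemma Fvar_ok (Γ : FOb) (A : FTy Γ) :
  HasTy Σ (proj1_sig Γ ++ [proj1_sig A]) (Var (length (proj1_sig Γ)))
        (subst_ty (idl (length (proj1_sig Γ))) (proj1_sig A)).
Proof. rewrite subst_ty_idl. rewrite <- (nth_app_last' (proj1_sig Γ) (proj1_sig A) dty) at 2.
  apply tm_var. apply (proj2_sig (Fext Γ A)). rewrite length_app; simpl; lia. Qed.
Definition Fvar (Γ : FOb) (A : FTy Γ) : FTm (Fext Γ A) (Ftysub _ _ A (Fpr Γ A)) :=
  exist _ (Var (length (proj1_sig Γ))) (Fvar_ok Γ A).
Definition Fpair (Δ Γ : FOb) (A : FTy Γ) (f : FHom Δ Γ) (a : FTm Δ (Ftysub Δ Γ A f)) : FHom Δ (Fext Γ A) :=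
  exist _ (proj1_sig f ++ [proj1_sig a]) (ctxmap_snoc Σ _ _ _ _ _ (proj2_sig f) (proj2_sig a)).

Lemma FTm_eq (Γ : FOb) (A B : FTy Γ) (a : FTm Γ A) (b : FTm Γ B) :
  proj1_sig A = proj1_sig B -> proj1_sig a = proj1_sig b -> existT (FTm Γ) A a = existT (FTm Γ) B b.
Proof.
  destruct A as [A HA], B as [B HB]; simpl; intros ->. rewrite (proof_irrelevance _ HA HB).
  intros H. f_equal. apply sig_ext; auto.
Qed.

Lemma FTm_cast (Γ : FOb) (A B : FTy Γ) (e : A = B) (a : FTm Γ A) :
  proj1_sig (eq_rect A (FTm Γ) a B e) = proj1_sig a.
Proof. subst B; reflexivity. Qed.

Lemma Fcomp_assoc W X Y Z (h : FHom Y Z) (g : FHom X Y) (f : FHom W X) :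
  Fcomp W Y Z h (Fcomp W X Y g f) = Fcomp W X Z (Fcomp X Y Z h g) f.
Proof.
  apply sig_ext; simpl. rewrite map_map. apply map_ext_in. intros t Ht.
  symmetry. apply subst_comp. rewrite (proj1 (proj2_sig g)).
  eapply ctxmap_sc; [apply (proj2_sig h)|]; auto.
Qed.
Lemma Fcomp_id_l X Y (f : FHom X Y) : Fcomp X Y Y (Fidm Y) f = f.
Proof.
  apply sig_ext; simpl. pose proof (proj1 (proj2_sig f)) as Hf.
  rewrite map_subst_idl by lia. rewrite <- Hf. apply firstn_all.
Qed.
Lemma Fcomp_id_r X Y (f : FHom X Y) : Fcomp X X Y f (Fidm X) = f.
Proof. apply sig_ext; simpl. rewrite <- (map_id (proj1_sig f)) at 2. apply map_ext. apply subst_idl. Qed.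
Lemma Fbang_unique X (f : FHom X Ftop) : f = Fbang X.
Proof. apply sig_ext; simpl. pose proof (proj1 (proj2_sig f)) as Hf. simpl in Hf. apply length_zero_iff_nil; exact Hf. Qed.
Lemma Ftysub_id Γ (A : FTy Γ) : Ftysub Γ Γ A (Fidm Γ) = A.
Proof. apply sig_ext; simpl. apply subst_ty_idl. Qed.
Lemma Ftysub_comp Θ Δ Γ (A : FTy Γ) (f : FHom Δ Γ) (g : FHom Θ Δ) :
  Ftysub Θ Γ A (Fcomp Θ Δ Γ f g) = Ftysub Θ Δ (Ftysub Δ Γ A f) g.
Proof.
  apply sig_ext; simpl. symmetry. apply subst_ty_comp.
  rewrite (proj1 (proj2_sig f)). eapply IsTy_sc. apply (proj2_sig A).
Qed.
Lemma Ftmsub_id Γ A (a : FTm Γ A) :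
  existT (FTm Γ) (Ftysub Γ Γ A (Fidm Γ)) (Ftmsub Γ Γ A a (Fidm Γ)) = existT (FTm Γ) A a.
Proof. apply FTm_eq; simpl; [apply subst_ty_idl | apply subst_idl]. Qed.
Lemma Ftmsub_comp Θ Δ Γ A (a : FTm Γ A) (f : FHom Δ Γ) (g : FHom Θ Δ) :
  existT (FTm Θ) _ (Ftmsub Θ Γ A a (Fcomp Θ Δ Γ f g))
  = existT (FTm Θ) _ (Ftmsub Θ Δ _ (Ftmsub Δ Γ A a f) g).
Proof.
  pose proof (proj1 (proj2_sig f)) as Hf. apply FTm_eq; simpl; symmetry.
  - apply subst_ty_comp. rewrite Hf. eapply IsTy_sc. apply (proj2_sig A).
  - apply subst_comp. rewrite Hf. eapply HasTy_sc. apply (proj2_sig a).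
Qed.
Lemma Fpr_pair Δ Γ A f a : Fcomp Δ (Fext Γ A) Γ (Fpr Γ A) (Fpair Δ Γ A f a) = f.
Proof.
  apply sig_ext; simpl. pose proof (proj1 (proj2_sig f)) as Hf.
  rewrite map_subst_idl by (rewrite length_app; lia). rewrite <- Hf. apply firstn_snoc.
Qed.
Lemma Fvar_pair Δ Γ A f a :
  existT (FTm Δ) _ (Ftmsub Δ (Fext Γ A) _ (Fvar Γ A) (Fpair Δ Γ A f a)) = existT (FTm Δ) _ a.
Proof.
  pose proof (proj1 (proj2_sig f)) as Hf. apply FTm_eq; simpl.
  - rewrite subst_ty_idl. rewrite <- (subst_ty_prefix (length (proj1_sig f))).
    + rewrite firstn_snoc. reflexivity.
    + rewrite Hf. eapply IsTy_sc. apply (proj2_sig A).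
  - rewrite <- Hf. apply nth_app_last'.
Qed.
Lemma Fpair_eta Δ Γ A (h : FHom Δ (Fext Γ A)) :
  Fpair Δ Γ A (Fcomp Δ (Fext Γ A) Γ (Fpr Γ A) h)
    (eq_rect _ (FTm Δ) (Ftmsub Δ (Fext Γ A) _ (Fvar Γ A) h) _
       (eq_sym (Ftysub_comp Δ (Fext Γ A) Γ A (Fpr Γ A) h))) = h.
Proof.
  apply sig_ext. unfold Fpair. cbn [proj1_sig]. rewrite FTm_cast. simpl.
  pose proof (proj1 (proj2_sig h)) as Hh; simpl in Hh. rewrite length_app in Hh; simpl in Hh.
  rewrite map_subst_idl by lia. apply firstn_last. lia.
Qed.
Lemma Fpair_comp Θ Δ Γ A (f : FHom Δ Γ) (a : FTm Δ (Ftysub Δ Γ A f)) (g : FHom Θ Δ) :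
  Fcomp Θ Δ (Fext Γ A) (Fpair Δ Γ A f a) g
  = Fpair Θ Γ A (Fcomp Θ Δ Γ f g)
      (eq_rect _ (FTm Θ) (Ftmsub Θ Δ _ a g) _ (eq_sym (Ftysub_comp Θ Δ Γ A f g))).
Proof. apply sig_ext. unfold Fpair. cbn [proj1_sig]. rewrite FTm_cast. simpl. apply map_app. Qed.

Definition FSig_cwf : Cwf :=
  {| Ob := FOb; Hom := FHom; comp := Fcomp; idm := Fidm;
     comp_assoc := Fcomp_assoc; comp_id_l := Fcomp_id_l; comp_id_r := Fcomp_id_r;
     top := Ftop; bang := Fbang; bang_unique := Fbang_unique;
     Ty := FTy; tysub := Ftysub; tysub_id := Ftysub_id; tysub_comp := Ftysub_comp;
     ext := Fext; pr := Fpr; Tm := FTm; tmsub := Ftmsub;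
     tmsub_id := Ftmsub_id; tmsub_comp := Ftmsub_comp;
     var := Fvar; pair := Fpair; pr_pair := Fpr_pair; var_pair := Fvar_pair;
     pair_eta := Fpair_eta; pair_comp := Fpair_comp |}.
End FSig.

Arguments Fo {C D} _ _.
Arguments Fh {C D} _ {X Y} _.
Arguments sg {C D} _ {Γ} _.
Arguments th {C D} _ {Γ A} _.
Arguments F_id {C D} _ _.
Arguments F_comp {C D} _ {X Y Z} _ _.
Arguments F_top {C D} _.
Arguments sg_sub {C D} _ {Δ Γ} _ _.
Arguments F_ext {C D} _ _ _.
Arguments F_pr {C D} _ _ _.
Arguments th_sub {C D} _ {Δ Γ A} _ _.
Arguments th_var {C D} _ _ _.
Arguments F_pair {C D} _ {Δ Γ A} _ _.

Lemma th_cast {C D : Cwf} (G : CwfMor C D) (Y : Ob C) (T1 T2 : Ty C Y) (e : T1 = T2) (x : Tm C Y T1) :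
  th G (eq_rect T1 (Tm C Y) x T2 e) = eq_rect _ (Tm D (Fo G Y)) (th G x) _ (f_equal (@sg C D G Y) e).
Proof. subst T2. reflexivity. Qed.

Lemma rew_trans {A : Type} (P : A -> Type) (x y z : A) (e1 : x = y) (e2 : y = z) (a : P x) :
  eq_rect y P (eq_rect x P a y e1) z e2 = eq_rect x P a z (eq_trans e1 e2).
Proof. subst y z. reflexivity. Qed.

Definition cwf_mor_comp {C D E : Cwf} (G : CwfMor D E) (F : CwfMor C D) : CwfMor C E.
Proof.
  refine (Build_CwfMor C E (fun X => Fo G (Fo F X)) (fun X Y f => Fh G (Fh F f)) _ _ _
            (fun Γ A => sg G (sg F A))
            (fun Δ Γ A f => eq_trans (f_equal (@sg D E G (Fo F Δ)) (sg_sub F A f))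
                                     (sg_sub G (sg F A) (Fh F f)))
            _ _ (fun Γ A a => th G (th F a)) _ _ _).
  - intros X. rewrite (F_id F), (F_id G). reflexivity.
  - intros X Y Z g f. rewrite (F_comp F), (F_comp G). reflexivity.
  - rewrite (F_top F). apply (F_top G).
  - intros Γ A. rewrite (F_ext F). apply (F_ext G).
  - intros Γ A. etransitivity.
    + exact (f_equal (fun s : {X : Ob D & Hom D X (Fo F Γ)} =>
               existT (fun X => Hom E X (Fo G (Fo F Γ))) (Fo G (projT1 s)) (Fh G (projT2 s)))
             (F_pr F Γ A)).
    + exact (F_pr G (Fo F Γ) (sg F A)).
  - intros Δ Γ A a f. etransitivity.
    + exact (f_equal (fun s : {T : Ty D (Fo F Δ) & Tm D (Fo F Δ) T} =>
               existT (Tm E (Fo G (Fo F Δ))) (sg G (projT1 s)) (th G (projT2 s)))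
             (th_sub F a f)).
    + exact (th_sub G (th F a) (Fh F f)).
  - intros Γ A. etransitivity.
    + exact (f_equal (fun s : {X : Ob D & {T : Ty D X & Tm D X T}} =>
               existT (fun X => {T : Ty E X & Tm E X T}) (Fo G (projT1 s))
                 (existT (Tm E (Fo G (projT1 s))) (sg G (projT1 (projT2 s))) (th G (projT2 (projT2 s)))))
             (th_var F Γ A)).
    + exact (th_var G (Fo F Γ) (sg F A)).
  - intros Δ Γ A f a. etransitivity.
    + exact (f_equal (fun s : {X : Ob D & Hom D (Fo F Δ) X} =>
               existT (fun X => Hom E (Fo G (Fo F Δ)) X) (Fo G (projT1 s)) (Fh G (projT2 s)))
             (F_pair F f a)).
    + simpl. etransitivity; [exact (F_pair G (Fh F f) _)|].
      rewrite th_cast, rew_trans. reflexivity.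
Defined.

Definition is_presignature (Σ : Decl -> Prop) : Prop :=
  (forall Γ S, Σ (DTy Γ S) -> precontext Γ) /\
  (forall Γ f U, Σ (DFun Γ f U) -> precontext Γ /\ tysc (length Γ) U) /\
  (forall Γ Γ' S, Σ (DTy Γ S) -> Σ (DTy Γ' S) -> Γ = Γ') /\
  (forall Γ Γ' f U U', Σ (DFun Γ f U) -> Σ (DFun Γ' f U') -> Γ = Γ' /\ U = U').

Definition is_signature (Σ : Decl -> Prop) : Prop :=
  is_presignature Σ /\
  (forall Γ S, Σ (DTy Γ S) -> Ctx Σ Γ) /\
  (forall Γ f U, Σ (DFun Γ f U) -> IsTy Σ Γ U).

Lemma signature_fun_scoped Σ : is_signature Σ -> fun_scoped Σ.
Proof. intros [[_ [H _]] _] Γ f U Hd. apply (H _ _ _ Hd). Qed.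

Definition F_Sigma (Σ : Decl -> Prop) (HΣ : is_signature Σ) : Cwf :=
  FSig_cwf Σ (signature_fun_scoped Σ HΣ).

Section Weaken.
Variables Σ1 Σ2 : Decl -> Prop.
Hypothesis Hsub : forall d, Σ1 d -> Σ2 d.
Lemma J_weaken :
  (forall Γ, Ctx Σ1 Γ -> Ctx Σ2 Γ) /\
  (forall Γ A, IsTy Σ1 Γ A -> IsTy Σ2 Γ A) /\
  (forall Γ t A, HasTy Σ1 Γ t A -> HasTy Σ2 Γ t A).
Proof.
  apply J_mut; intros; econstructor; eauto.
Qed.
Lemma Ctx_weaken Γ : Ctx Σ1 Γ -> Ctx Σ2 Γ. Proof. apply J_weaken. Qed.
Lemma IsTy_weaken Γ A : IsTy Σ1 Γ A -> IsTy Σ2 Γ A. Proof. apply J_weaken. Qed.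
Lemma HasTy_weaken Γ t A : HasTy Σ1 Γ t A -> HasTy Σ2 Γ t A. Proof. apply J_weaken. Qed.
Lemma ctxmap_weaken Δ Γ a : ctxmap Σ1 Δ Γ a -> ctxmap Σ2 Δ Γ a.
Proof. intros [H1 H2]; split; auto. intros; apply HasTy_weaken; auto. Qed.
End Weaken.

Lemma existT_ob {P : ctx -> Prop} (Q : sig P -> Type) (K : Type) (π : forall X, Q X -> K)
  (πinj : forall X (a b : Q X), π X a = π X b -> a = b) (x y : sig P) (a : Q x) (b : Q y) :
  proj1_sig x = proj1_sig y -> π x a = π y b -> existT Q x a = existT Q y b.
Proof. intros H. assert (x = y) by (apply sig_ext; auto). subst y. intros; f_equal; auto. Qed.

Lemma hom_cast {P : ctx -> Prop} (R : sig P -> list tm -> Prop) (x y : sig P) (e : x = y) (a : {l | R x l}) :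
  proj1_sig (eq_rect x (fun X => {l | R X l}) a y e) = proj1_sig a.
Proof. subst y; reflexivity. Qed.

Definition embedding (Σ1 Σ2 : Decl -> Prop) (H1 : is_signature Σ1) (H2 : is_signature Σ2)
  (Hsub : forall d, Σ1 d -> Σ2 d) : CwfMor (F_Sigma Σ1 H1) (F_Sigma Σ2 H2).
Proof.
  refine (Build_CwfMor (F_Sigma Σ1 H1) (F_Sigma Σ2 H2)
            (fun X => exist _ (proj1_sig X) (Ctx_weaken _ _ Hsub _ (proj2_sig X)))
            (fun X Y f => exist _ (proj1_sig f) (ctxmap_weaken _ _ Hsub _ _ _ (proj2_sig f)))
            _ _ _
            (fun Γ A => exist _ (proj1_sig A) (IsTy_weaken _ _ Hsub _ _ (proj2_sig A)))
            _ _ _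
            (fun Γ A a => exist _ (proj1_sig a) (HasTy_weaken _ _ Hsub _ _ _ (proj2_sig a)))
            _ _ _); simpl; intros.
  all: try (apply sig_ext; reflexivity).
  - apply (existT_ob _ _ (fun _ h => proj1_sig h)); auto. intros; apply sig_ext; auto.
  - apply FTm_eq; reflexivity.
  - apply (existT_ob _ _ (fun _ s => (proj1_sig (projT1 s), proj1_sig (projT2 s)))); auto.
    intros X [T t] [T' t'] Heq. simpl in Heq. injection Heq as E1 E2. apply FTm_eq; auto.
  - apply (existT_ob _ _ (fun _ h => proj1_sig h)); auto.
    + intros; apply sig_ext; auto.
    + simpl. f_equal. f_equal. symmetry. match goal with |- proj1_sig (eq_rect ?x (FTm _ ?G) ?a ?y ?e) = _ => exact (FTm_cast Σ2 G x y e a) end.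
  Unshelve. intros; apply sig_ext; reflexivity.
Defined.

Definition sigma_ext (Σ : Decl -> Prop) (ΓS : ctx) (S : nat) : Decl -> Prop :=
  fun d => Σ d \/ d = DTy ΓS S.

Lemma sigma_ext_incl Σ ΓS S : forall d, Σ d -> sigma_ext Σ ΓS S d.
Proof. intros d H; left; exact H. Qed.

Lemma sigma_ext_signature Σ ΓS S :
  is_signature Σ -> (forall Γ, ~ Σ (DTy Γ S)) -> Ctx Σ ΓS -> is_signature (sigma_ext Σ ΓS S).
Proof.
  intros [[P1 [P2 [P3 P4]]] [S1 S2]] HS HΓ.
  assert (W := sigma_ext_incl Σ ΓS S).
  split; [split; [|split; [|split]]|split].
  - intros Γ T [H|H]; [eauto|]. injection H as -> ->. eapply Ctx_pre; eauto.
  - intros Γ f U [H|H]; [eauto|discriminate].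
  - intros Γ Γ' T [H|H] [H'|H'].
    + eauto.
    + injection H' as -> ->. exfalso; eapply HS; eauto.
    + injection H as -> ->. exfalso; eapply HS; eauto.
    + injection H as -> ->. injection H' as -> . reflexivity.
  - intros Γ Γ' f U U' [H|H] [H'|H']; try discriminate. eauto.
  - intros Γ T [H|H].
    + eapply Ctx_weaken; eauto.
    + injection H as -> ->. eapply Ctx_weaken; eauto.
  - intros Γ f U [H|H]; [|discriminate]. eapply IsTy_weaken; eauto.
Qed.

Definition OV (Γ : ctx) : list tm := idl (length Γ).

Lemma S_OV_type Σ ΓS S (HΓ : Ctx Σ ΓS) :
  IsTy (sigma_ext Σ ΓS S) ΓS (PTy S (OV ΓS)).
Proof.
  assert (HΓ' : Ctx (sigma_ext Σ ΓS S) ΓS) by (eapply Ctx_weaken; [apply sigma_ext_incl| exact HΓ]).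
  destruct (ctxmap_id _ _ HΓ') as [Hl Hk].
  eapply ty_decl; eauto. right; reflexivity.
Qed.

Definition GammaS_obj (Σ : Decl -> Prop) (ΓS : ctx) (S : nat) (HΓ : Ctx Σ ΓS)
  : FOb (sigma_ext Σ ΓS S) :=
  exist _ ΓS (Ctx_weaken _ _ (sigma_ext_incl Σ ΓS S) _ HΓ).
Definition S_OV_ty (Σ : Decl -> Prop) (ΓS : ctx) (S : nat) (HΓ : Ctx Σ ΓS)
  : FTy (sigma_ext Σ ΓS S) (GammaS_obj Σ ΓS S HΓ) :=
  exist _ (PTy S (OV ΓS)) (S_OV_type Σ ΓS S HΓ).

From Stdlib Require Import List Arith Lia ProofIrrelevance Eqdep FunctionalExtensionality IndefiniteDescription.
Import ListNotations.

(* A cwf morphism out of a syntactic cwf is determined by what it does on the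
   generic instances T(OV Γ) and f(OV Γ) of the declared symbols: every context,
   type, term and context map is built from them by the cwf operations, which a
   morphism preserves.  So we interpret the syntax of Σ' in C by the cwf structure
   of C, reading the old symbols off G and the new symbol S off A.  This
   interpretation is functional, stable under weakening and substitution, and total
   on the judgements derivable in Σ'; its values form the required morphism G'.
   Conversely, the graph of any morphism out of F_Σ0 (Σ0 ⊆ Σ') that agrees with G
   and A on the generic instances is contained in the interpretation.  Applied to
   G and to G' ∘ E this gives G' ∘ E = G; applied to a second candidate it gives
   uniqueness. *)

Lemma ex_transport {I : Type} {F : I -> Type} (P : forall i, F i -> Prop) i j (x : F i) (y : F j) :
  existT F i x = existT F j y -> P i x -> P j y.
Proof. intros e H. change (P (projT1 (existT F i x)) (projT2 (existT F i x))) in H. rewrite e in H. exact H. Qed.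

Lemma Ctx_snoc_inv Σ Γ B : Ctx Σ (Γ++[B]) -> Ctx Σ Γ /\ IsTy Σ Γ B.
Proof. intros H. inversion H. destruct Γ; discriminate. apply app_inj_tail in H0. destruct H0; subst; auto. Qed.

Lemma IsTy_weaken1 Σ (HΣ : fun_scoped Σ) Γ B B' : IsTy Σ Γ B' -> Ctx Σ (Γ++[B]) -> IsTy Σ (Γ++[B]) B'.
Proof.
  intros H HC. pose proof (IsTy_subst Σ HΣ _ _ _ _ H HC (ctxmap_idl Σ Γ [B] HC)) as K.
  rewrite subst_ty_idl in K. exact K.
Qed.

Lemma Ctx_nth Σ (HΣ : fun_scoped Σ) Γ i : Ctx Σ Γ -> i < length Γ -> IsTy Σ Γ (nth i Γ dty).
Proof.
  intros H. revert i. induction H as [|Γ A0 H IH H1]; intros i Hi; simpl in Hi; [lia|].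
  rewrite length_app in Hi; simpl in Hi.
  assert (HC : Ctx Σ (Γ ++ [A0])) by (constructor; auto).
  apply IsTy_weaken1; auto.
  destruct (Nat.lt_ge_cases i (length Γ)).
  - rewrite nth_app_last by auto. apply IH; auto.
  - assert (i = length Γ) by lia. subst. rewrite nth_app_last'. auto.
Qed.

Lemma length_S_snoc {T} (a : list T) n : length a = Datatypes.S n -> exists a0 t, a = a0 ++ [t] /\ length a0 = n.
Proof.
  induction a as [|x a' _] using rev_ind; intros H; [simpl in H; discriminate|].
  exists a', x. rewrite length_app in H. simpl in H. split; auto. lia.
Qed.

Lemma firstn_app_le {T} k (l l' : list T) : k <= length l -> firstn k (l ++ l') = firstn k l.
Proof. intros H. rewrite firstn_app. replace (k - length l) with 0 by lia. simpl. apply app_nil_r. Qed.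

Lemma ctxmap_snoc_inv Σ Δ Γ B a t : ctxmap Σ Δ (Γ++[B]) (a++[t]) -> length a = length Γ ->
  ctxmap Σ Δ Γ a /\ HasTy Σ Δ t (subst_ty a B).
Proof.
  intros [Hl Hk] Ha. split.
  - split; auto. intros k hk.
    assert (hk' : k < length (Γ ++ [B])) by (rewrite length_app; simpl; lia).
    specialize (Hk k hk'). rewrite app_nth1 in Hk by lia. rewrite nth_app_last in Hk by lia.
    rewrite firstn_app_le in Hk by lia. exact Hk.
  - assert (hk' : length Γ < length (Γ ++ [B])) by (rewrite length_app; simpl; lia).
    specialize (Hk _ hk'). rewrite <- Ha in Hk at 1. rewrite nth_app_last' in Hk.
    rewrite <- Ha in Hk. rewrite firstn_snoc in Hk. rewrite Ha, nth_app_last' in Hk. exact Hk.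
Qed.
Lemma subst_ty_OV a n T : length a = n -> subst_ty a (PTy T (idl n)) = PTy T a.
Proof. intros <-. unfold subst_ty; simpl. rewrite map_subst_idl by lia. rewrite firstn_all. reflexivity. Qed.
Lemma subst_App_OV a n f : length a = n -> subst a (App f (idl n)) = App f a.
Proof. intros <-. simpl. rewrite map_subst_idl by lia. rewrite firstn_all. reflexivity. Qed.

Lemma IsTy_generic Σ Γ T : Σ (DTy Γ T) -> Ctx Σ Γ -> IsTy Σ Γ (PTy T (OV Γ)).
Proof. intros s c. destruct (ctxmap_id Σ Γ c) as [l1 l2]. eapply ty_decl; eauto. Qed.
Lemma HasTy_generic Σ Γ f U : Σ (DFun Γ f U) -> Ctx Σ Γ -> IsTy Σ Γ U -> HasTy Σ Γ (App f (OV Γ)) U.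
Proof.
  intros s c q. destruct (ctxmap_id Σ Γ c) as [l1 l2].
  pose proof (tm_decl Σ Γ f U Γ (idl (length Γ)) s c c l1 l2) as K.
  rewrite subst_ty_idl in K. apply K. exact q.
Qed.

Ltac inj_snoc := repeat match goal with
 | H : ?l1 ++ [?x] = ?l2 ++ [?y] |- _ => apply app_inj_tail in H; destruct H; subst
 | H : [] = _ ++ [_] |- _ => exfalso; eapply app_cons_not_nil; exact H
 | H : _ ++ [_] = [] |- _ => exfalso; eapply app_cons_not_nil; symmetry; exact H
 end.

Ltac inv_existT H := match type of H with existT _ ?x _ = existT _ ?y _ =>
   let e := fresh "e" in assert (e : x = y) by exact (f_equal (@projT1 _ _) H); subst; apply inj_pair2 in H end.

Ltac apply_IHs := repeat match goal with
 | IH : forall _ _ _, _ -> _, R : _ |- _ => specialize (IH _ _ _ R)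
 | IH : forall _ _, _ -> _, R : _ |- _ => specialize (IH _ _ R)
 | IH : forall _, _ -> _, R : _ |- _ => specialize (IH _ R)
 end.

Ltac inv_existTs := repeat match goal with H : existT _ _ _ = existT _ _ _ |- _ => inv_existT H end.

Lemma CwfMor_eq {C D : Cwf} (F1 F2 : CwfMor C D) :
  (forall X, Fo F1 X = Fo F2 X) ->
  (forall X Y (f : Hom C X Y),
     existT (fun X => {Y : Ob D & Hom D X Y}) (Fo F1 X) (existT _ (Fo F1 Y) (Fh F1 f))
     = existT _ (Fo F2 X) (existT _ (Fo F2 Y) (Fh F2 f))) ->
  (forall X (B : Ty C X), existT (Ty D) (Fo F1 X) (sg F1 B) = existT (Ty D) (Fo F2 X) (sg F2 B)) ->
  (forall X B (t : Tm C X B),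
     existT (fun X => {T : Ty D X & Tm D X T}) (Fo F1 X) (existT _ (sg F1 B) (th F1 t))
     = existT _ (Fo F2 X) (existT _ (sg F2 B) (th F2 t))) ->
  F1 = F2.
Proof.
  destruct F1 as [Fo1 Fh1 Fid1 Fcomp1 Ftop1 sg1 sgsub1 Fext1 Fpr1 th1 thsub1 thvar1 Fpair1].
  destruct F2 as [Fo2 Fh2 Fid2 Fcomp2 Ftop2 sg2 sgsub2 Fext2 Fpr2 th2 thsub2 thvar2 Fpair2].
  simpl. intros hFo hFh hsg hth.
  assert (Fo1 = Fo2) by (apply functional_extensionality; exact hFo). subst Fo2.
  assert (Fh1 = Fh2).
  { do 2 (apply functional_extensionality_dep; intros ?).
    apply functional_extensionality. intros f. specialize (hFh _ _ f). inv_existTs. exact hFh. }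
  subst Fh2.
  assert (sg1 = sg2).
  { apply functional_extensionality_dep; intros X.
    apply functional_extensionality. intros B. specialize (hsg X B). inv_existTs. exact hsg. }
  subst sg2.
  assert (th1 = th2).
  { do 2 (apply functional_extensionality_dep; intros ?).
    apply functional_extensionality. intros t. specialize (hth _ _ t). inv_existTs. exact hth. }
  subst th2.
  assert (Fid1 = Fid2) by apply proof_irrelevance. subst Fid2.
  assert (Fcomp1 = Fcomp2) by apply proof_irrelevance. subst Fcomp2.
  assert (Ftop1 = Ftop2) by apply proof_irrelevance. subst Ftop2.
  assert (sgsub1 = sgsub2) by apply proof_irrelevance. subst sgsub2.
  assert (Fext1 = Fext2) by apply proof_irrelevance. subst Fext2.
  assert (Fpr1 = Fpr2) by apply proof_irrelevance. subst Fpr2.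
  assert (thsub1 = thsub2) by apply proof_irrelevance. subst thsub2.
  assert (thvar1 = thvar2) by apply proof_irrelevance. subst thvar2.
  assert (Fpair1 = Fpair2) by apply proof_irrelevance. subst Fpair2.
  reflexivity.
Qed.

Section Interpretation.
Variables (C : Cwf) (Σ : Decl -> Prop) (HΣ : is_signature Σ) (G : CwfMor (F_Sigma Σ HΣ) C)
  (S : nat) (ΓS : ctx) (HS : forall Γ, ~ Σ (DTy Γ S)) (HΓS : Ctx Σ ΓS)
  (A : Ty C (Fo G (exist (fun Γ => Ctx Σ Γ) ΓS HΓS))).

(* A relation rather than a recursive function: judgements are propositions, so
   their derivations cannot be eliminated into the data of C. *)
Inductive IntCtx : ctx -> Ob C -> Prop :=
| int_nil : IntCtx [] (top C)
| int_ext : forall Γ B X T, IntCtx Γ X -> IntTy Γ B X T -> IntCtx (Γ ++ [B]) (ext C X T)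
with IntTy : ctx -> pty -> forall X : Ob C, Ty C X -> Prop :=
| int_decl_ty : forall Δ T a X ΓT (HT : Ctx Σ ΓT) (pT : IsTy Σ ΓT (PTy T (OV ΓT))) h,
    Σ (DTy ΓT T) -> IntSub Δ ΓT a X (Fo G (exist _ ΓT HT)) h ->
    IntTy Δ (PTy T a) X (tysub C _ _ (@sg _ _ G (exist _ ΓT HT) (exist _ (PTy T (OV ΓT)) pT)) h)
| int_new_ty : forall Δ a X h, IntSub Δ ΓS a X (Fo G (exist _ ΓS HΓS)) h ->
    IntTy Δ (PTy S a) X (tysub C _ _ A h)
with IntTm : ctx -> tm -> forall X (T : Ty C X), Tm C X T -> Prop :=
| int_var_last : forall Γ B X T, IntTy Γ B X T ->
    IntTm (Γ ++ [B]) (Var (length Γ)) (ext C X T) (tysub C _ _ T (pr C X T)) (var C X T)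
| int_var_wk : forall Γ B i X T U u, IntTy Γ B X T -> IntTm Γ (Var i) X U u ->
    IntTm (Γ ++ [B]) (Var i) (ext C X T) (tysub C _ _ U (pr C X T)) (tmsub C _ _ U u (pr C X T))
| int_app : forall Δ f a X Γf U (HΓf : Ctx Σ Γf) (pU : IsTy Σ Γf U)
    (pt : HasTy Σ Γf (App f (OV Γf)) U) h,
    Σ (DFun Γf f U) -> IntSub Δ Γf a X (Fo G (exist _ Γf HΓf)) h ->
    IntTm Δ (App f a) X (tysub C _ _ (@sg _ _ G (exist _ Γf HΓf) (exist _ U pU)) h)
      (tmsub C _ _ _ (@th _ _ G (exist _ Γf HΓf) (exist _ U pU) (exist _ (App f (OV Γf)) pt)) h)
with IntSub : ctx -> ctx -> list tm -> forall X Y, Hom C X Y -> Prop :=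
| int_sub_nil : forall Δ X, IntCtx Δ X -> IntSub Δ [] [] X (top C) (bang C X)
| int_sub_snoc : forall Δ Γ B a t X Y T h u, IntSub Δ Γ a X Y h -> IntTy Γ B Y T ->
    IntTm Δ t X (tysub C _ _ T h) u ->
    IntSub Δ (Γ ++ [B]) (a ++ [t]) X (ext C Y T) (pair C X Y T h u).

Scheme IntCtx_mind := Induction for IntCtx Sort Prop
with IntTy_mind := Induction for IntTy Sort Prop
with IntTm_mind := Induction for IntTm Sort Prop
with IntSub_mind := Induction for IntSub Sort Prop.
Combined Scheme Int_mut from IntCtx_mind, IntTy_mind, IntTm_mind, IntSub_mind.

Lemma Int_wf :
  (forall Γ X, IntCtx Γ X -> True) /\
  (forall Γ B X T, IntTy Γ B X T -> IntCtx Γ X) /\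
  (forall Γ t X T u, IntTm Γ t X T u -> IntCtx Γ X) /\
  (forall Δ Γ a X Y h, IntSub Δ Γ a X Y h -> IntCtx Δ X /\ IntCtx Γ Y /\ length a = length Γ).
Proof.
  apply Int_mut; intros; auto; try tauto.
  - constructor; auto.
  - constructor; auto.
  - repeat split; auto. constructor.
  - destruct H as [? [? ?]]. repeat split; auto. constructor; auto.
    rewrite !length_app; simpl; lia.
Qed.

Lemma IntTy_ctx Γ B X T : IntTy Γ B X T -> IntCtx Γ X. Proof. apply Int_wf. Qed.
Lemma IntSub_wf Δ Γ a X Y h : IntSub Δ Γ a X Y h -> IntCtx Δ X /\ IntCtx Γ Y /\ length a = length Γ.
Proof. apply Int_wf. Qed.

Lemma IntTm_var_lt Γ i X T u : IntTm Γ (Var i) X T u -> i < length Γ.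
Proof.
  intros H. remember (Var i) as t. revert i Heqt.
  induction H as [| Γ B j X T U u _ _ IHu |]; intros i0 E; try discriminate; injection E as <-; rewrite length_app; simpl.
  - lia.
  - specialize (IHu _ eq_refl). lia.
Qed.

Lemma decl_ty_ctx_uniq Γ Γ' T : Σ (DTy Γ T) -> Σ (DTy Γ' T) -> Γ = Γ'.
Proof. pose proof HΣ as [[_ [_ [H _]]] _]. eauto. Qed.
Lemma decl_fun_uniq Γ Γ' f U U' : Σ (DFun Γ f U) -> Σ (DFun Γ' f U') -> Γ = Γ' /\ U = U'.
Proof. pose proof HΣ as [[_ [_ [_ H]]] _]. eauto. Qed.

Lemma Int_functional :
  (forall Γ X, IntCtx Γ X -> forall X', IntCtx Γ X' -> X = X') /\
  (forall Γ B X T, IntTy Γ B X T -> forall X' T', IntTy Γ B X' T' ->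
     existT (Ty C) X T = existT (Ty C) X' T') /\
  (forall Γ t X T u, IntTm Γ t X T u -> forall X' T' u', IntTm Γ t X' T' u' ->
     existT (fun X => {T : Ty C X & Tm C X T}) X (existT _ T u) = existT _ X' (existT _ T' u')) /\
  (forall Δ Γ a X Y h, IntSub Δ Γ a X Y h -> forall X' Y' h', IntSub Δ Γ a X' Y' h' ->
     existT (fun X => {Y : Ob C & Hom C X Y}) X (existT _ Y h) = existT _ X' (existT _ Y' h')).
Proof.
  apply Int_mut.
  - intros X' H. inversion H; auto. inj_snoc.
  - intros Γ B X T r IH1 r0 IH2 X' H1; clear r r0.
    inversion H1; subst; inj_snoc. apply_IHs. inv_existTs. subst. reflexivity.
  - intros Δ T a X ΓT HT pT h s r IH X' T' H0; clear r.
    inversion H0; subst.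
    + assert (ΓT0 = ΓT) by (eapply decl_ty_ctx_uniq; eauto). subst.
      assert (HT0 = HT) by apply proof_irrelevance. subst.
      assert (pT0 = pT) by apply proof_irrelevance. subst.
      apply_IHs. inv_existTs. subst. reflexivity.
    + exfalso; eapply HS; eauto.
  - intros Δ a X h r IH X' T' H0; clear r.
    inversion H0; subst.
    + exfalso; eapply HS; eauto.
    + apply_IHs. inv_existTs. subst. reflexivity.
  - intros Γ B X T r IH X' T' u' H0.
    inversion H0; subst; inj_snoc.
    + clear r. apply_IHs. inv_existTs. subst. reflexivity.
    + exfalso. match goal with R : IntTm _ (Var _) _ _ _ |- _ => apply IntTm_var_lt in R end. lia.
  - intros Γ B i X T U u r IH1 r0 IH2 X' T' u' H1.
    inversion H1; subst; inj_snoc.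
    + apply IntTm_var_lt in r0. lia.
    + clear r r0. apply_IHs. inv_existTs. subst. reflexivity.
  - intros Δ f a X Γf U HΓf pU pt h s r IH X' T' u' H0; clear r.
    inversion H0; subst.
    match goal with s' : Σ (DFun _ f _) |- _ => destruct (decl_fun_uniq _ _ _ _ _ s s') end. subst.
    assert (HΓf0 = HΓf) by apply proof_irrelevance. subst.
    assert (pU0 = pU) by apply proof_irrelevance. subst.
    assert (pt0 = pt) by apply proof_irrelevance. subst.
    apply_IHs. inv_existTs. subst. reflexivity.
  - intros Δ X r IH X' Y' h' H0; clear r. inversion H0; subst; inj_snoc. apply_IHs. inv_existTs. subst. reflexivity.
  - intros Δ Γ B a t X Y T h u r IH1 r0 IH2 r1 IH3 X' Y' h' H2; clear r r0 r1.
    inversion H2; subst; inj_snoc. apply_IHs. inv_existTs. subst. reflexivity.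
Qed.

Lemma IntCtx_fun Γ X X' : IntCtx Γ X -> IntCtx Γ X' -> X = X'. Proof. intros; eapply Int_functional; eauto. Qed.
Lemma IntTy_fun Γ B X T X' T' : IntTy Γ B X T -> IntTy Γ B X' T' -> existT (Ty C) X T = existT (Ty C) X' T'.
Proof. intros; eapply Int_functional; eauto. Qed.
Lemma IntTm_fun Γ t X T u X' T' u' : IntTm Γ t X T u -> IntTm Γ t X' T' u' ->
     existT (fun X => {T : Ty C X & Tm C X T}) X (existT _ T u) = existT _ X' (existT _ T' u').
Proof. intros; eapply Int_functional; eauto. Qed.
Lemma IntSub_fun Δ Γ a X Y h X' Y' h' : IntSub Δ Γ a X Y h -> IntSub Δ Γ a X' Y' h' ->
     existT (fun X => {Y : Ob C & Hom C X Y}) X (existT _ Y h) = existT _ X' (existT _ Y' h').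
Proof. intros; eapply Int_functional; eauto. Qed.

Lemma IntTm_cast Γ t X T u T' (e : T = T') : IntTm Γ t X T u -> IntTm Γ t X T' (eq_rect T (Tm C X) u T' e).
Proof. destruct e. auto. Qed.

Lemma IntTm_transport Γ t X T u T' u' : existT (Tm C X) T u = existT (Tm C X) T' u' -> IntTm Γ t X T u -> IntTm Γ t X T' u'.
Proof. intros e; apply (ex_transport (fun T u => IntTm Γ t X T u) _ _ _ _ e). Qed.

Lemma Int_weaken :
 (forall Γ X, IntCtx Γ X -> True) /\
 (forall Γ B X T, IntTy Γ B X T -> forall E TE, IntTy Γ E X TE ->
    IntTy (Γ++[E]) B (ext C X TE) (tysub C _ _ T (pr C X TE))) /\
 (forall Γ t X T u, IntTm Γ t X T u -> forall E TE, IntTy Γ E X TE ->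
    IntTm (Γ++[E]) t (ext C X TE) (tysub C _ _ T (pr C X TE)) (tmsub C _ _ _ u (pr C X TE))) /\
 (forall Δ Γ a X Y h, IntSub Δ Γ a X Y h -> forall E TE, IntTy Δ E X TE ->
    IntSub (Δ++[E]) Γ a (ext C X TE) Y (comp C _ _ _ h (pr C X TE))).
Proof.
  apply Int_mut; intros.
  - auto.
  - auto.
  - rewrite <- tysub_comp. apply int_decl_ty; auto.
  - rewrite <- tysub_comp. apply int_new_ty; auto.
  - apply int_var_wk; auto; apply int_var_last; auto.
  - apply int_var_wk; auto; apply int_var_wk; auto.
  - eapply IntTm_transport; [apply tmsub_comp|]. apply int_app; auto.
  - rewrite (bang_unique C _ (comp C _ _ _ (bang C X) (pr C X TE))). apply int_sub_nil.
    apply int_ext; auto.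
  - rewrite pair_comp. apply int_sub_snoc; auto. apply IntTm_cast. auto.
Qed.

Lemma IntTy_weaken Γ B X T E TE : IntTy Γ B X T -> IntTy Γ E X TE ->
    IntTy (Γ++[E]) B (ext C X TE) (tysub C _ _ T (pr C X TE)).
Proof. intros; eapply Int_weaken; eauto. Qed.
Lemma IntSub_weaken Δ Γ a X Y h E TE : IntSub Δ Γ a X Y h -> IntTy Δ E X TE ->
    IntSub (Δ++[E]) Γ a (ext C X TE) Y (comp C _ _ _ h (pr C X TE)).
Proof. intros; eapply Int_weaken; eauto. Qed.

Lemma idl_S n : idl (Datatypes.S n) = idl n ++ [Var n].
Proof. unfold idl. rewrite seq_S, map_app. reflexivity. Qed.

Lemma IntSub_id Γ X : IntCtx Γ X -> IntSub Γ Γ (idl (length Γ)) X X (idm C X).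
Proof.
  induction 1 as [|Γ B X T RC IH RT].
  - rewrite (bang_unique C _ (idm C (top C))). apply int_sub_nil. apply int_nil.
  - rewrite length_app, Nat.add_comm. simpl. rewrite idl_S.
    rewrite <- (pair_eta C _ _ T (idm C (ext C X T))). apply int_sub_snoc; auto.
    + rewrite comp_id_r. pose proof (IntSub_weaken _ _ _ _ _ _ _ _ IH RT) as K.
      rewrite comp_id_l in K. exact K.
    + apply IntTm_cast. eapply IntTm_transport; [symmetry; apply tmsub_id|]. apply int_var_last; auto.
Qed.

Lemma IntSub_pr Γ B X T : IntTy Γ B X T -> IntSub (Γ++[B]) Γ (idl (length Γ)) (ext C X T) X (pr C X T).
Proof.
  intros H. pose proof (IntSub_weaken _ _ _ _ _ _ _ _ (IntSub_id _ _ (IntTy_ctx _ _ _ _ H)) H) as K.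
  rewrite comp_id_l in K. exact K.
Qed.

Lemma IntSub_snoc_inv Δ Γ B a X Y h : IntSub Δ (Γ++[B]) a X Y h ->
  exists a0 t Y0 T h0 u, a = a0++[t] /\ IntSub Δ Γ a0 X Y0 h0 /\ IntTy Γ B Y0 T /\
    IntTm Δ t X (tysub C _ _ T h0) u /\
    existT (Hom C X) Y h = existT (Hom C X) (ext C Y0 T) (pair C _ _ _ h0 u).
Proof.
  intros H. inversion H; subst; inj_snoc. do 6 eexists. repeat split; eauto. inv_existTs. subst. reflexivity.
Qed.

Lemma Int_subst :
 (forall Γ X, IntCtx Γ X -> True) /\
 (forall Γ B X T, IntTy Γ B X T -> forall Δ a XΔ h, IntSub Δ Γ a XΔ X h ->
    IntTy Δ (subst_ty a B) XΔ (tysub C _ _ T h)) /\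
 (forall Γ t X T u, IntTm Γ t X T u -> forall Δ a XΔ h, IntSub Δ Γ a XΔ X h ->
    IntTm Δ (subst a t) XΔ (tysub C _ _ T h) (tmsub C _ _ _ u h)) /\
 (forall Γ Z g X Y g', IntSub Γ Z g X Y g' -> forall Δ a XΔ h, IntSub Δ Γ a XΔ X h ->
    IntSub Δ Z (map (subst a) g) XΔ Y (comp C _ _ _ g' h)).
Proof.
  apply Int_mut.
  - auto.
  - auto.
  - intros; unfold subst_ty; simpl. rewrite <- tysub_comp. apply int_decl_ty; auto.
  - intros; unfold subst_ty; simpl. rewrite <- tysub_comp. apply int_new_ty; auto.
  - intros Γ B X T RB _ Δ a XΔ h Rh.
    destruct (IntSub_snoc_inv _ _ _ _ _ _ _ Rh) as (a0 & t & Y0 & T0 & h0 & u & -> & R1 & R2 & R3 & E).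
    pose proof (IntTy_fun _ _ _ _ _ _ RB R2) as E2. inv_existT E2. subst. inv_existT E. subst.
    simpl. destruct (IntSub_wf _ _ _ _ _ _ R1) as (_ & _ & Hl).
    rewrite <- Hl, nth_app_last'.
    eapply IntTm_transport; [symmetry; apply var_pair|]. exact R3.
  - intros Γ B i X T U u RB _ Ru IHu Δ a XΔ h Rh.
    destruct (IntSub_snoc_inv _ _ _ _ _ _ _ Rh) as (a0 & t & Y0 & T0 & h0 & u' & -> & R1 & R2 & R3 & E).
    pose proof (IntTy_fun _ _ _ _ _ _ RB R2) as E2. inv_existT E2. subst. inv_existT E. subst.
    simpl. destruct (IntSub_wf _ _ _ _ _ _ R1) as (_ & _ & Hl).
    pose proof (IntTm_var_lt _ _ _ _ _ Ru) as Hi.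
    rewrite app_nth1 by lia.
    specialize (IHu _ _ _ _ R1). simpl in IHu.
    eapply IntTm_transport; [|exact IHu].
    etransitivity; [|apply tmsub_comp]. rewrite pr_pair. reflexivity.
  - intros; simpl. eapply IntTm_transport; [apply tmsub_comp|]. apply int_app; auto.
  - intros Δ X _ _ Δ' a XΔ h Rh. simpl.
    rewrite (bang_unique C _ (comp C _ _ _ (bang C X) h)). apply int_sub_nil.
    apply (IntSub_wf _ _ _ _ _ _ Rh).
  - intros. rewrite map_app. simpl. rewrite pair_comp. apply int_sub_snoc; auto. apply IntTm_cast. auto.
Qed.

Lemma IntTy_subst Γ B X T Δ a XΔ h : IntTy Γ B X T -> IntSub Δ Γ a XΔ X h ->
    IntTy Δ (subst_ty a B) XΔ (tysub C _ _ T h).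
Proof. intros; eapply Int_subst; eauto. Qed.
Lemma IntSub_comp Γ Z g X Y g' Δ a XΔ h : IntSub Γ Z g X Y g' -> IntSub Δ Γ a XΔ X h ->
    IntSub Δ Z (map (subst a) g) XΔ Y (comp C _ _ _ g' h).
Proof. intros; eapply Int_subst; eauto. Qed.

Lemma IntTm_subst Γ t X T u Δ a XΔ h : IntTm Γ t X T u -> IntSub Δ Γ a XΔ X h ->
    IntTm Δ (subst a t) XΔ (tysub C _ _ T h) (tmsub C _ _ _ u h).
Proof. intros; eapply Int_subst; eauto. Qed.

Lemma IntTm_transport_ob Γ t X T u X' T' u' :
  existT (fun X => {T : Ty C X & Tm C X T}) X (existT _ T u) = existT _ X' (existT _ T' u') ->
  IntTm Γ t X T u -> IntTm Γ t X' T' u'.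
Proof. intros e. inv_existT e. subst. inv_existT e. subst. auto. Qed.
Lemma IntTy_transport Γ B X T X' T' : existT (Ty C) X T = existT (Ty C) X' T' -> IntTy Γ B X T -> IntTy Γ B X' T'.
Proof. intros e. inv_existT e. subst. auto. Qed.
Lemma IntSub_transport Δ Γ a X Y h Y' h' : existT (Hom C X) Y h = existT (Hom C X) Y' h' ->
  IntSub Δ Γ a X Y h -> IntSub Δ Γ a X Y' h'.
Proof. intros e. inv_existT e. subst. auto. Qed.

Lemma int_decl_ty_transport Δ T a X ΓT Y (T0 : Ty C Y) h (HT' : Ctx Σ ΓT) (pT : IsTy Σ ΓT (PTy T (OV ΓT))) :
  Σ (DTy ΓT T) ->
  existT (Ty C) Y T0 = existT (Ty C) (Fo G (exist _ ΓT HT')) (@sg _ _ G (exist _ ΓT HT') (exist _ _ pT)) ->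
  IntSub Δ ΓT a X Y h -> IntTy Δ (PTy T a) X (tysub C _ _ T0 h).
Proof. intros s e. inv_existT e. subst. intros; apply int_decl_ty; auto. Qed.

Lemma int_new_ty_transport Δ a X Y (T0 : Ty C Y) h :
  existT (Ty C) Y T0 = existT (Ty C) (Fo G (exist _ ΓS HΓS)) A ->
  IntSub Δ ΓS a X Y h -> IntTy Δ (PTy S a) X (tysub C _ _ T0 h).
Proof. intros e. inv_existT e. subst. intros; apply int_new_ty; auto. Qed.

Lemma int_app_transport Δ f a X Γf U Y (T0 : Ty C Y) u0 h (HΓf : Ctx Σ Γf) (pU : IsTy Σ Γf U)
    (pt : HasTy Σ Γf (App f (OV Γf)) U) :
  Σ (DFun Γf f U) ->
  existT (fun X => {T : Ty C X & Tm C X T}) Y (existT _ T0 u0) =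
  existT _ (Fo G (exist _ Γf HΓf)) (existT _ (@sg _ _ G (exist _ Γf HΓf) (exist _ U pU))
     (@th _ _ G (exist _ Γf HΓf) (exist _ U pU) (exist _ (App f (OV Γf)) pt))) ->
  IntSub Δ Γf a X Y h -> IntTm Δ (App f a) X (tysub C _ _ T0 h) (tmsub C _ _ _ u0 h).
Proof. intros s e. inv_existT e. subst. inv_existT e. subst. intros; apply int_app; auto. Qed.

Lemma tmsub_transport X X' Y (h : Hom C X Y) (h' : Hom C X' Y) T (u : Tm C Y T) :
  existT (fun X => Hom C X Y) X h = existT _ X' h' ->
  existT (fun X => {T : Ty C X & Tm C X T}) X (existT _ (tysub C _ _ T h) (tmsub C _ _ _ u h)) =
  existT _ X' (existT _ (tysub C _ _ T h') (tmsub C _ _ _ u h')).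
Proof. intros e. inv_existT e. subst. reflexivity. Qed.

Definition tracks Σ0 HΣ0 (Hm : CwfMor (F_Sigma Σ0 HΣ0) C) : Prop :=
 (forall Γ (p : Ctx Σ0 Γ), IntCtx Γ (Fo Hm (exist _ Γ p))) /\
 (forall Γ (p : Ctx Σ0 Γ) B (q : IsTy Σ0 Γ B),
    IntTy Γ B (Fo Hm (exist _ Γ p)) (@sg _ _ Hm (exist _ Γ p) (exist (fun b => IsTy Σ0 Γ b) B q))) /\
 (forall Γ (p : Ctx Σ0 Γ) B (q : IsTy Σ0 Γ B) t (r : HasTy Σ0 Γ t B),
    IntTm Γ t (Fo Hm (exist _ Γ p)) (@sg _ _ Hm (exist _ Γ p) (exist (fun b => IsTy Σ0 Γ b) B q))
      (@th _ _ Hm (exist _ Γ p) (exist (fun b => IsTy Σ0 Γ b) B q) (exist (fun x => HasTy Σ0 Γ x B) t r))) /\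
 (forall Δ (pΔ : Ctx Σ0 Δ) Γ (pΓ : Ctx Σ0 Γ) a (m : ctxmap Σ0 Δ Γ a),
    IntSub Δ Γ a (Fo Hm (exist _ Δ pΔ)) (Fo Hm (exist _ Γ pΓ))
      (@Fh _ _ Hm (exist _ Δ pΔ) (exist _ Γ pΓ) (exist _ a m))).

Section Tracking.
Variables (Σ0 : Decl -> Prop) (HΣ0 : is_signature Σ0)
  (Hinc : forall d, Σ0 d -> sigma_ext Σ ΓS S d)
  (Hm : CwfMor (F_Sigma Σ0 HΣ0) C).

Notation ob0 Γ p := (exist (fun g => Ctx Σ0 g) Γ p).
Notation ty0 Γ p B q := (@sg _ _ Hm (ob0 Γ p) (exist (fun b => IsTy Σ0 Γ b) B q)).
Notation tm0 Γ p B q t r := (@th _ _ Hm (ob0 Γ p) (exist (fun b => IsTy Σ0 Γ b) B q)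
                               (exist (fun x => HasTy Σ0 Γ x B) t r)).

Hypothesis Hdecl_ty : forall Γ T (p0 : Ctx Σ0 Γ) (q0 : IsTy Σ0 Γ (PTy T (OV Γ))) (p : Ctx Σ Γ)
  (q : IsTy Σ Γ (PTy T (OV Γ))), Σ (DTy Γ T) ->
  existT (Ty C) (Fo Hm (ob0 Γ p0)) (ty0 Γ p0 _ q0) =
  existT (Ty C) (Fo G (exist _ Γ p)) (@sg _ _ G (exist _ Γ p) (exist _ _ q)).
Hypothesis Hnew_ty : forall (p0 : Ctx Σ0 ΓS) (q0 : IsTy Σ0 ΓS (PTy S (OV ΓS))), Σ0 (DTy ΓS S) ->
  existT (Ty C) (Fo Hm (ob0 ΓS p0)) (ty0 ΓS p0 _ q0) = existT (Ty C) (Fo G (exist _ ΓS HΓS)) A.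
Hypothesis Hdecl_tm : forall Γ f U (p0 : Ctx Σ0 Γ) (q0 : IsTy Σ0 Γ U) (r0 : HasTy Σ0 Γ (App f (OV Γ)) U)
  (p : Ctx Σ Γ) (q : IsTy Σ Γ U) (r : HasTy Σ Γ (App f (OV Γ)) U), Σ (DFun Γ f U) ->
  existT (fun X => {T : Ty C X & Tm C X T}) (Fo Hm (ob0 Γ p0)) (existT _ (ty0 Γ p0 U q0) (tm0 Γ p0 U q0 _ r0)) =
  existT _ (Fo G (exist _ Γ p)) (existT _ (@sg _ _ G (exist _ Γ p) (exist _ U q))
     (@th _ _ G (exist _ Γ p) (exist _ U q) (exist _ (App f (OV Γ)) r))).

Lemma mor_ob_congr (X X' : FOb Σ0) : proj1_sig X = proj1_sig X' -> Fo Hm X = Fo Hm X'.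
Proof. intros e. f_equal. apply sig_ext; auto. Qed.

Lemma mor_ty_congr (X X' : FOb Σ0) (B : FTy Σ0 X) (B' : FTy Σ0 X') :
  proj1_sig X = proj1_sig X' -> proj1_sig B = proj1_sig B' ->
  existT (Ty C) (Fo Hm X) (@sg _ _ Hm X B) = existT (Ty C) (Fo Hm X') (@sg _ _ Hm X' B').
Proof.
  destruct X as [x px], X' as [x' px']; simpl; intros ->.
  rewrite (proof_irrelevance _ px px'). destruct B as [b qb], B' as [b' qb']; simpl; intros ->.
  rewrite (proof_irrelevance _ qb qb'). reflexivity.
Qed.

Lemma mor_tm_congr (X X' : FOb Σ0) (B : FTy Σ0 X) (B' : FTy Σ0 X') (t : FTm Σ0 X B) (t' : FTm Σ0 X' B') :
  proj1_sig X = proj1_sig X' -> proj1_sig B = proj1_sig B' -> proj1_sig t = proj1_sig t' ->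
  existT (fun X => {T : Ty C X & Tm C X T}) (Fo Hm X) (existT _ (@sg _ _ Hm X B) (@th _ _ Hm X B t)) =
  existT _ (Fo Hm X') (existT _ (@sg _ _ Hm X' B') (@th _ _ Hm X' B' t')).
Proof.
  destruct X as [x px], X' as [x' px']; simpl; intros ->.
  rewrite (proof_irrelevance _ px px'). destruct B as [b qb], B' as [b' qb']; simpl; intros ->.
  rewrite (proof_irrelevance _ qb qb'). destruct t as [t rt], t' as [t' rt']; simpl; intros ->.
  rewrite (proof_irrelevance _ rt rt'). reflexivity.
Qed.

Lemma mor_hom_congr (X X' Y Y' : FOb Σ0) (f : FHom Σ0 X Y) (f' : FHom Σ0 X' Y') :
  proj1_sig X = proj1_sig X' -> proj1_sig Y = proj1_sig Y' -> proj1_sig f = proj1_sig f' ->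
  existT (fun X => {Y : Ob C & Hom C X Y}) (Fo Hm X) (existT _ (Fo Hm Y) (@Fh _ _ Hm X Y f)) =
  existT _ (Fo Hm X') (existT _ (Fo Hm Y') (@Fh _ _ Hm X' Y' f')).
Proof.
  destruct X as [x px], X' as [x' px']; simpl; intros ->.
  rewrite (proof_irrelevance _ px px'). destruct Y as [y py], Y' as [y' py']; simpl; intros ->.
  rewrite (proof_irrelevance _ py py'). destruct f as [f rf], f' as [f' rf']; simpl; intros ->.
  rewrite (proof_irrelevance _ rf rf'). reflexivity.
Qed.

Lemma mor_hom_nil Δ (pΔ : Ctx Σ0 Δ) (p : Ctx Σ0 []) (m : ctxmap Σ0 Δ [] []) :
  existT (Hom C (Fo Hm (ob0 Δ pΔ))) (top C) (bang C _)
  = existT _ (Fo Hm (ob0 [] p)) (@Fh _ _ Hm (ob0 Δ pΔ) (ob0 [] p) (exist _ [] m)).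
Proof.
  assert (E : Fo Hm (ob0 [] p) = top C) by (rewrite <- (F_top Hm); apply mor_ob_congr; reflexivity).
  generalize (@Fh _ _ Hm (ob0 Δ pΔ) (ob0 [] p) (exist _ [] m)). rewrite E. intros h.
  rewrite (bang_unique C _ h). reflexivity.
Qed.

Definition ctx_types_tracked Γ := forall Γ1 B1 Γ2, Γ = Γ1 ++ B1 :: Γ2 -> forall (p1 : Ctx Σ0 Γ1) (q1 : IsTy Σ0 Γ1 B1),
  IntTy Γ1 B1 (Fo Hm (ob0 Γ1 p1)) (ty0 Γ1 p1 B1 q1).

Lemma Σ0_fun_scoped : fun_scoped Σ0. Proof. apply signature_fun_scoped; auto. Qed.

Lemma IntSub_of_tracked Γ : forall (pΓ : Ctx Σ0 Γ), ctx_types_tracked Γ -> forall Δ (pΔ : Ctx Σ0 Δ),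
  IntCtx Δ (Fo Hm (ob0 Δ pΔ)) -> forall a (m : ctxmap Σ0 Δ Γ a),
  (forall k t B' (q : IsTy Σ0 Δ B') (r : HasTy Σ0 Δ t B'), k < length Γ -> nth k a (Var 0) = t ->
     subst_ty (firstn k a) (nth k Γ dty) = B' ->
     IntTm Δ t (Fo Hm (ob0 Δ pΔ)) (ty0 Δ pΔ B' q) (tm0 Δ pΔ B' q t r)) ->
  IntSub Δ Γ a (Fo Hm (ob0 Δ pΔ)) (Fo Hm (ob0 Γ pΓ)) (@Fh _ _ Hm (ob0 Δ pΔ) (ob0 Γ pΓ) (exist _ a m)).
Proof.
  induction Γ as [|B Γ0 IH] using rev_ind.
  - intros pΓ good Δ pΔ RΔ a m Hk.
    pose proof (proj1 m) as Hl. destruct a; [|discriminate].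
    eapply IntSub_transport; [apply mor_hom_nil|]. apply int_sub_nil; assumption.
  - intros pΓ good Δ pΔ RΔ a m Hk.
    destruct (length_S_snoc a (length Γ0)) as (a0 & t & -> & Hl0).
    { rewrite (proj1 m), length_app. simpl. lia. }
    destruct (ctxmap_snoc_inv _ _ _ _ _ _ m Hl0) as [m0 mt].
    destruct (Ctx_snoc_inv _ _ _ pΓ) as [p0 qB].
    set (ΓF := ob0 Γ0 p0).
    set (BF := exist (fun b => IsTy Σ0 Γ0 b) B qB : Ty (F_Sigma Σ0 HΣ0) ΓF).
    set (fa0 := exist _ a0 m0 : Hom (F_Sigma Σ0 HΣ0) (ob0 Δ pΔ) ΓF).
    set (ft := exist _ t mt : Tm (F_Sigma Σ0 HΣ0) _ (tysub (F_Sigma Σ0 HΣ0) _ _ BF fa0)).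
    assert (E : existT (Hom C (Fo Hm (ob0 Δ pΔ))) (ext C (Fo Hm ΓF) (sg Hm BF))
       (pair C _ _ _ (Fh Hm fa0) (eq_rect _ _ (th Hm ft) _ (sg_sub Hm BF fa0)))
       = existT _ (Fo Hm (ob0 (Γ0++[B]) pΓ)) (@Fh _ _ Hm (ob0 Δ pΔ) (ob0 (Γ0++[B]) pΓ) (exist _ (a0++[t]) m))).
    { etransitivity; [symmetry; apply (F_pair Hm)|].
      pose proof (mor_hom_congr (ob0 Δ pΔ) (ob0 Δ pΔ) (ext (F_Sigma Σ0 HΣ0) ΓF BF) (ob0 (Γ0++[B]) pΓ)
         (pair (F_Sigma Σ0 HΣ0) _ _ _ fa0 ft) (exist _ (a0++[t]) m : Hom (F_Sigma Σ0 HΣ0) (ob0 Δ pΔ) (ob0 (Γ0++[B]) pΓ)) eq_refl eq_refl eq_refl) as K.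
      inv_existT K. exact K. }
    eapply IntSub_transport; [exact E|]. apply int_sub_snoc.
    + apply IH.
      * intros Γ1 B1 Γ2 e. apply (good Γ1 B1 (Γ2++[B])). rewrite e, <- app_assoc. reflexivity.
      * exact RΔ.
      * intros k t' B' q r hk e1 e2. apply (Hk k); auto.
        -- rewrite length_app. simpl. lia.
        -- rewrite app_nth1 by lia. auto.
        -- rewrite firstn_app_le by lia. rewrite nth_app_last by lia. auto.
    + apply (good Γ0 B []). reflexivity.
    + apply IntTm_cast.
      pose proof (Hk (length Γ0) t (subst_ty a0 B) (proj2_sig (tysub (F_Sigma Σ0 HΣ0) _ _ BF fa0)) mt) as K.
      rewrite <- Hl0, nth_app_last', firstn_snoc, Hl0, nth_app_last', length_app in K.
      apply K; simpl; auto; lia.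
Qed.

Definition ctx_vars_tracked Γ (p : Ctx Σ0 Γ) := forall i B' (q : IsTy Σ0 Γ B') (r : HasTy Σ0 Γ (Var i) B'),
  i < length Γ -> nth i Γ dty = B' ->
  IntTm Γ (Var i) (Fo Hm (ob0 Γ p)) (ty0 Γ p B' q) (tm0 Γ p B' q (Var i) r).

Lemma ctx_vars_tracked_snoc Γ B (c : Ctx Σ0 Γ) (t : IsTy Σ0 Γ B) (p : Ctx Σ0 (Γ ++ [B])) :
  IntTy Γ B (Fo Hm (ob0 Γ c)) (ty0 Γ c B t) -> ctx_vars_tracked Γ c -> ctx_vars_tracked (Γ ++ [B]) p.
Proof.
  intros RB Vc.
  set (ΓF := ob0 Γ c).
  set (BF := exist (fun b => IsTy Σ0 Γ b) B t : Ty (F_Sigma Σ0 HΣ0) ΓF).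
  intros i B' q r hi e. rewrite length_app in hi; simpl in hi.
  destruct (Nat.lt_ge_cases i (length Γ)) as [lt|ge].
  - pose (qi := Ctx_nth Σ0 Σ0_fun_scoped Γ i c lt).
    pose (ri := tm_var Σ0 Γ i c lt).
    set (TiF := exist (fun b => IsTy Σ0 Γ b) (nth i Γ dty) qi : Ty (F_Sigma Σ0 HΣ0) ΓF).
    set (xi := exist (fun x => HasTy Σ0 Γ x (nth i Γ dty)) (Var i) ri : Tm (F_Sigma Σ0 HΣ0) ΓF TiF).
    pose proof (int_var_wk Γ B i _ _ _ _ RB (Vc i _ qi ri lt eq_refl)) as K.
    eapply IntTm_transport_ob; [|exact K].
    etransitivity; [symmetry; exact (tmsub_transport _ _ _ _ _ _ (th Hm xi) (F_pr Hm ΓF BF))|].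
    etransitivity; [symmetry; exact (f_equal (existT _ _) (th_sub Hm xi (pr (F_Sigma Σ0 HΣ0) ΓF BF)))|].
    apply mor_tm_congr; simpl.
    + reflexivity.
    + rewrite subst_ty_idl, <- e, nth_app_last by auto. reflexivity.
    + rewrite nth_idl by auto. reflexivity.
  - assert (i = length Γ) by lia. subst i.
    eapply IntTm_transport_ob; [|exact (int_var_last Γ B _ _ RB)].
    etransitivity; [symmetry; exact (th_var Hm ΓF BF)|].
    apply mor_tm_congr; simpl; auto.
    rewrite subst_ty_idl, <- e, nth_app_last'. reflexivity.
Qed.

Lemma tracks_decl_ty Γ T Δ a (s : Σ0 (DTy Γ T)) (cΓ : Ctx Σ0 Γ) (p : Ctx Σ0 Δ)
  (m : ctxmap Σ0 Δ Γ a) (q : IsTy Σ0 Δ (PTy T a)) :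
  IntSub Δ Γ a (Fo Hm (ob0 Δ p)) (Fo Hm (ob0 Γ cΓ)) (@Fh _ _ Hm (ob0 Δ p) (ob0 Γ cΓ) (exist _ a m)) ->
  IntTy Δ (PTy T a) (Fo Hm (ob0 Δ p)) (ty0 Δ p (PTy T a) q).
Proof.
  intros RS.
  pose (qT := IsTy_generic Σ0 Γ T s cΓ).
  set (TF := exist (fun b => IsTy Σ0 Γ b) _ qT : Ty (F_Sigma Σ0 HΣ0) (ob0 Γ cΓ)).
  set (fa := exist _ a m : Hom (F_Sigma Σ0 HΣ0) (ob0 Δ p) (ob0 Γ cΓ)).
  assert (Eq1 : existT (Ty C) (Fo Hm (ob0 Δ p)) (ty0 Δ p (PTy T a) q) =
                existT (Ty C) (Fo Hm (ob0 Δ p)) (tysub C _ _ (sg Hm TF) (Fh Hm fa))).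
  { rewrite <- (sg_sub Hm). apply mor_ty_congr; simpl; auto.
    symmetry. apply subst_ty_OV. apply (proj1 m). }
  eapply IntTy_transport; [symmetry; exact Eq1|].
  destruct (Hinc _ s) as [sΣ|sS].
  - pose proof HΣ as [_ [HC _]]. pose (pΣ := HC _ _ sΣ).
    eapply int_decl_ty_transport; [exact sΣ| exact (Hdecl_ty Γ T cΓ qT pΣ (IsTy_generic Σ Γ T sΣ pΣ) sΣ)| exact RS].
  - injection sS as -> ->. eapply int_new_ty_transport; [exact (Hnew_ty cΓ qT s)| exact RS].
Qed.

Lemma tracks_decl_tm Γf f U Δ a (s : Σ0 (DFun Γf f U)) (cΓ : Ctx Σ0 Γf) (p : Ctx Σ0 Δ)
  (m : ctxmap Σ0 Δ Γf a) (q : IsTy Σ0 Δ (subst_ty a U)) (r : HasTy Σ0 Δ (App f a) (subst_ty a U)) :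
  IntSub Δ Γf a (Fo Hm (ob0 Δ p)) (Fo Hm (ob0 Γf cΓ)) (@Fh _ _ Hm (ob0 Δ p) (ob0 Γf cΓ) (exist _ a m)) ->
  IntTm Δ (App f a) (Fo Hm (ob0 Δ p)) (ty0 Δ p _ q) (tm0 Δ p _ q _ r).
Proof.
  intros RS.
  destruct (Hinc _ s) as [sΣ|sS]; [|discriminate].
  pose proof HΣ0 as [_ [_ HU0]]. pose (qU := HU0 _ _ _ s).
  pose (rF := HasTy_generic Σ0 Γf f U s cΓ qU).
  set (UF := exist (fun b => IsTy Σ0 Γf b) U qU : Ty (F_Sigma Σ0 HΣ0) (ob0 Γf cΓ)).
  set (xF := exist (fun x => HasTy Σ0 Γf x U) _ rF : Tm (F_Sigma Σ0 HΣ0) (ob0 Γf cΓ) UF).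
  set (fa := exist _ a m : Hom (F_Sigma Σ0 HΣ0) (ob0 Δ p) (ob0 Γf cΓ)).
  pose proof HΣ as [_ [_ HUΣ]]. pose (qΣ := HUΣ _ _ _ sΣ). pose (pΣ := IsTy_ctx _ _ _ qΣ).
  pose (rΣ := HasTy_generic Σ Γf f U sΣ pΣ qΣ).
  eapply IntTm_transport_ob;
    [|eapply int_app_transport; [exact sΣ| exact (Hdecl_tm Γf f U cΓ qU rF pΣ qΣ rΣ sΣ)| exact RS]].
  etransitivity; [symmetry; exact (f_equal (existT _ _) (th_sub Hm xF fa))|].
  apply mor_tm_congr; simpl; auto. apply subst_App_OV. apply (proj1 m).
Qed.

Lemma tracks_judgements :
 (forall Γ, Ctx Σ0 Γ -> forall p, IntCtx Γ (Fo Hm (ob0 Γ p)) /\ ctx_types_tracked Γ /\ ctx_vars_tracked Γ p) /\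
 (forall Γ B, IsTy Σ0 Γ B -> forall p q, IntTy Γ B (Fo Hm (ob0 Γ p)) (ty0 Γ p B q)) /\
 (forall Γ t B, HasTy Σ0 Γ t B -> forall p q r,
    IntTm Γ t (Fo Hm (ob0 Γ p)) (ty0 Γ p B q) (tm0 Γ p B q t r)).
Proof.
  apply J_mut.
  - intros p. split; [|split].
    + replace (Fo Hm (ob0 [] p)) with (top C); [apply int_nil|].
      rewrite <- (F_top Hm). apply mor_ob_congr. reflexivity.
    + intros Γ1 B1 Γ2 e. exfalso; eapply app_cons_not_nil; exact e.
    + intros i B' q r hi. simpl in hi. lia.
  - intros Γ B c IHc t IHt p.
    destruct (IHc c) as (Rc & Gc & Vc).
    split; [|split].
    + replace (Fo Hm (ob0 (Γ++[B]) p)) with (ext C (Fo Hm (ob0 Γ c)) (ty0 Γ c B t));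
        [apply int_ext; auto|].
      rewrite <- (F_ext Hm). apply mor_ob_congr. reflexivity.
    + intros Γ1 B1 Γ2 e p1 q1. induction Γ2 as [|x Γ2' _] using rev_ind.
      * apply app_inj_tail in e. destruct e; subst. apply IHt.
      * rewrite app_comm_cons, app_assoc in e. apply app_inj_tail in e. destruct e; subst.
        apply (Gc Γ1 B1 Γ2'); auto.
    + apply (ctx_vars_tracked_snoc Γ B c t); auto.
  - intros Γ T Δ a s cΔ IHΔ cΓ IHΓ len Hk IHk p q.
    apply (tracks_decl_ty Γ T Δ a s cΓ p (conj len Hk)).
    apply IntSub_of_tracked; [apply (IHΓ cΓ)| apply (IHΔ p)|].
    intros k t B' q' r hk e1 e2. subst t B'. apply IHk; auto.
  - intros Γ i c IHc hi p q r. apply (IHc p); auto.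
  - intros Γf f U Δ a s cΔ IHΔ cΓ IHΓ len Hk IHk tyU _ p q r.
    apply (tracks_decl_tm Γf f U Δ a s cΓ p (conj len Hk)).
    apply IntSub_of_tracked; [apply (IHΓ cΓ)| apply (IHΔ p)|].
    intros k t B' q' r' hk e1 e2. subst t B'. apply IHk; auto.
Qed.
Lemma tracks_ctxmap Δ (pΔ : Ctx Σ0 Δ) Γ (pΓ : Ctx Σ0 Γ) a (m : ctxmap Σ0 Δ Γ a) :
  IntSub Δ Γ a (Fo Hm (ob0 Δ pΔ)) (Fo Hm (ob0 Γ pΓ)) (@Fh _ _ Hm (ob0 Δ pΔ) (ob0 Γ pΓ) (exist _ a m)).
Proof.
  destruct tracks_judgements as (M1 & M2 & M3). apply IntSub_of_tracked.
  - apply (M1 _ pΓ pΓ).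
  - apply (M1 _ pΔ pΔ).
  - intros k t B' q r hk e1 e2. apply M3. exact r.
Qed.

Lemma tracks_of_generic : tracks Σ0 HΣ0 Hm.
Proof.
  destruct tracks_judgements as (M1 & M2 & M3). split; [|split; [|split]].
  - intros Γ p. apply (M1 _ p p).
  - intros Γ p B q. apply M2. exact q.
  - intros Γ p B q t r. apply M3. exact r.
  - intros. apply tracks_ctxmap.
Qed.
End Tracking.

Lemma tracked_mor_eq Σ0 HΣ0 (H1 H2 : CwfMor (F_Sigma Σ0 HΣ0) C) :
  tracks Σ0 HΣ0 H1 -> tracks Σ0 HΣ0 H2 -> H1 = H2.
Proof.
  intros (M1 & M2 & M3 & M4) (N1 & N2 & N3 & N4). apply CwfMor_eq.
  - intros [Γ p]. eapply IntCtx_fun; [apply M1|apply N1].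
  - intros [Δ pΔ] [Γ pΓ] [a m]. eapply IntSub_fun; [apply M4|apply N4].
  - intros [Γ p] [B q]. eapply IntTy_fun; [apply M2|apply N2].
  - intros [Γ p] [B q] [t r]. eapply IntTm_fun; [apply M3|apply N3].
Qed.

Lemma G_tracked : tracks Σ HΣ G.
Proof.
  apply (tracks_of_generic Σ HΣ (sigma_ext_incl Σ ΓS S) G).
  - intros Γ T p0 q0 p q _. rewrite (proof_irrelevance _ p0 p), (proof_irrelevance _ q0 q). reflexivity.
  - intros p0 q0 s. exfalso. eapply HS; eauto.
  - intros Γ f U p0 q0 r0 p q r _.
    rewrite (proof_irrelevance _ p0 p), (proof_irrelevance _ q0 q), (proof_irrelevance _ r0 r). reflexivity.
Qed.

Lemma IntTm_var_total Γ X : IntCtx Γ X -> forall i, i < length Γ ->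
  exists T u, IntTy Γ (nth i Γ dty) X T /\ IntTm Γ (Var i) X T u.
Proof.
  induction 1 as [|Γ B X T RC IH RT]; intros i hi; simpl in hi; [lia|].
  rewrite length_app in hi; simpl in hi.
  destruct (Nat.lt_ge_cases i (length Γ)) as [lt|ge].
  - destruct (IH i lt) as (T' & u & R1 & R2).
    exists (tysub C _ _ T' (pr C X T)), (tmsub C _ _ _ u (pr C X T)). split.
    + rewrite nth_app_last by auto. apply IntTy_weaken; auto.
    + apply int_var_wk; auto.
  - assert (i = length Γ) by lia. subst i.
    exists (tysub C _ _ T (pr C X T)), (var C X T). split.
    + rewrite nth_app_last'. apply IntTy_weaken; auto.
    + apply int_var_last; auto.
Qed.

Lemma IntTy_uniq Γ B X T T' : IntTy Γ B X T -> IntTy Γ B X T' -> T = T'.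
Proof. intros H1 H2. pose proof (IntTy_fun _ _ _ _ _ _ H1 H2) as K. inv_existTs. exact K. Qed.
Lemma IntSub_uniq Δ Γ a X Y h h' : IntSub Δ Γ a X Y h -> IntSub Δ Γ a X Y h' -> h = h'.
Proof. intros H1 H2. pose proof (IntSub_fun _ _ _ _ _ _ _ _ _ H1 H2) as K. inv_existTs. exact K. Qed.

Lemma IntSub_total Γ Y : IntCtx Γ Y -> forall Δ X a, IntCtx Δ X -> length a = length Γ ->
  (forall k, k < length Γ -> forall T, IntTy Δ (subst_ty (firstn k a) (nth k Γ dty)) X T ->
     exists u, IntTm Δ (nth k a (Var 0)) X T u) ->
  exists h, IntSub Δ Γ a X Y h.
Proof.
  induction 1 as [|Γ B Y T RC IH RT]; intros Δ X a RD hl Hk.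
  - destruct a; [|discriminate]. exists (bang C X). apply int_sub_nil; auto.
  - rewrite length_app in hl. simpl in hl. rewrite Nat.add_comm in hl.
    destruct (length_S_snoc a (length Γ) hl) as (a0 & t & -> & hl0).
    destruct (IH Δ X a0 RD hl0) as [h0 Rh0].
    { intros k hk T' RT'. destruct (Hk k) with (T := T') as [u Ru].
      - rewrite length_app; simpl; lia.
      - rewrite firstn_app_le by lia. rewrite nth_app_last by lia. auto.
      - exists u. rewrite app_nth1 in Ru by lia. auto. }
    pose proof (IntTy_subst _ _ _ _ _ _ _ _ RT Rh0) as RT'.
    destruct (Hk (length Γ)) with (T := tysub C _ _ T h0) as [u Ru].
    + rewrite length_app; simpl; lia.
    + replace (firstn (length Γ) (a0++[t])) with a0 by (rewrite <- hl0; symmetry; apply firstn_snoc).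
      rewrite nth_app_last'. auto.
    + rewrite <- hl0, nth_app_last' in Ru.
      exists (pair C _ _ _ h0 u). apply int_sub_snoc; auto.
Qed.

Definition Σ' := sigma_ext Σ ΓS S.
Definition HΣ' := sigma_ext_signature Σ ΓS S HΣ HS HΓS.

Lemma Int_total :
 (forall Γ, Ctx Σ' Γ -> exists X, IntCtx Γ X) /\
 (forall Γ B, IsTy Σ' Γ B -> forall X, IntCtx Γ X -> exists T, IntTy Γ B X T) /\
 (forall Γ t B, HasTy Σ' Γ t B -> forall X T, IntCtx Γ X -> IntTy Γ B X T -> exists u, IntTm Γ t X T u).
Proof.
  destruct G_tracked as (GM1 & GM2 & GM3 & GM4).
  apply J_mut.
  - exists (top C). apply int_nil.
  - intros Γ B c [X RX] t IHt. destruct (IHt X RX) as [T RT]. exists (ext C X T). apply int_ext; auto.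
  - intros Γ T Δ a s cΔ _ cΓ _ len Hk IHk X RX. destruct s as [sΣ|sS].
    + pose proof HΣ as [_ [HC _]]. pose (pΣ := HC _ _ sΣ).
      destruct (IntSub_total _ _ (GM1 Γ pΣ) Δ X a RX len) as [h Rh].
      { intros k hk T' RT'. apply (IHk k hk X T' RX RT'). }
      exists (tysub C _ _ (@sg _ _ G (exist _ Γ pΣ) (exist _ _ (IsTy_generic Σ Γ T sΣ pΣ))) h).
      apply int_decl_ty; auto.
    + injection sS as -> ->.
      destruct (IntSub_total _ _ (GM1 ΓS HΓS) Δ X a RX len) as [h Rh].
      { intros k hk T' RT'. apply (IHk k hk X T' RX RT'). }
      exists (tysub C _ _ A h). apply int_new_ty; auto.
  - intros Γ i c _ hi X T RX RT.
    destruct (IntTm_var_total Γ X RX i hi) as (T' & u & R1 & R2).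
    rewrite (IntTy_uniq _ _ _ _ _ RT R1). exists u; auto.
  - intros Γf f U Δ a s cΔ _ cΓ _ len Hk IHk tyU _ X T RX RT.
    destruct s as [sΣ|sS]; [|discriminate].
    pose proof HΣ as [_ [_ HUΣ]]. pose (qΣ := HUΣ _ _ _ sΣ). pose (pΣ := IsTy_ctx _ _ _ qΣ).
    destruct (IntSub_total _ _ (GM1 Γf pΣ) Δ X a RX len) as [h Rh].
    { intros k hk T' RT'. apply (IHk k hk X T' RX RT'). }
    pose proof (IntTy_subst _ _ _ _ _ _ _ _ (GM2 Γf pΣ U qΣ) Rh) as RU.
    rewrite (IntTy_uniq _ _ _ _ _ RT RU).
    eexists. apply (int_app Δ f a X Γf U pΣ qΣ (HasTy_generic Σ Γf f U sΣ pΣ qΣ) h sΣ Rh).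
Qed.

Definition FΣ' := F_Sigma Σ' HΣ'.

(* Values are chosen using [Int_total]; the cwf-morphism laws then follow from [Int_functional]. *)
Definition extension_ob (X : Ob FΣ') : Ob C :=
  proj1_sig (constructive_indefinite_description _ (proj1 Int_total _ (proj2_sig X))).
Lemma IntCtx_extension_ob (X : Ob FΣ') : IntCtx (proj1_sig X) (extension_ob X).
Proof. unfold extension_ob. apply proj2_sig. Qed.

Definition extension_ty (X : Ob FΣ') (B : Ty FΣ' X) : Ty C (extension_ob X) :=
  proj1_sig (constructive_indefinite_description _
    (proj1 (proj2 Int_total) _ _ (proj2_sig B) _ (IntCtx_extension_ob X))).
Lemma IntTy_extension_ty (X : Ob FΣ') (B : Ty FΣ' X) : IntTy (proj1_sig X) (proj1_sig B) (extension_ob X) (extension_ty X B).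
Proof. unfold extension_ty. apply proj2_sig. Qed.

Definition extension_tm (X : Ob FΣ') (B : Ty FΣ' X) (t : Tm FΣ' X B) : Tm C (extension_ob X) (extension_ty X B) :=
  proj1_sig (constructive_indefinite_description _
    (proj2 (proj2 Int_total) _ _ _ (proj2_sig t) _ _ (IntCtx_extension_ob X) (IntTy_extension_ty X B))).
Lemma IntTm_extension_tm (X : Ob FΣ') (B : Ty FΣ' X) (t : Tm FΣ' X B) :
  IntTm (proj1_sig X) (proj1_sig t) (extension_ob X) (extension_ty X B) (extension_tm X B t).
Proof. unfold extension_tm. apply proj2_sig. Qed.

Lemma extension_hom_exists (X Y : Ob FΣ') (f : Hom FΣ' X Y) :
  exists h, IntSub (proj1_sig X) (proj1_sig Y) (proj1_sig f) (extension_ob X) (extension_ob Y) h.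
Proof.
  destruct f as [a [hl hk]]. simpl.
  apply IntSub_total; auto.
  - apply IntCtx_extension_ob.
  - apply IntCtx_extension_ob.
  - intros k hkl T RT. apply (proj2 (proj2 Int_total) _ _ _ (hk k hkl) _ _ (IntCtx_extension_ob X) RT).
Qed.

Definition extension_hom (X Y : Ob FΣ') (f : Hom FΣ' X Y) : Hom C (extension_ob X) (extension_ob Y) :=
  proj1_sig (constructive_indefinite_description _ (extension_hom_exists X Y f)).
Lemma IntSub_extension_hom (X Y : Ob FΣ') (f : Hom FΣ' X Y) :
  IntSub (proj1_sig X) (proj1_sig Y) (proj1_sig f) (extension_ob X) (extension_ob Y) (extension_hom X Y f).
Proof. unfold extension_hom. apply proj2_sig. Qed.

Lemma extension_hom_id : forall X, extension_hom X X (idm FΣ' X) = idm C (extension_ob X).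
Proof. intros X. eapply IntSub_uniq; [apply IntSub_extension_hom| apply IntSub_id, IntCtx_extension_ob]. Qed.

Lemma extension_hom_comp : forall X Y Z (g : Hom FΣ' Y Z) (f : Hom FΣ' X Y),
  extension_hom X Z (comp FΣ' X Y Z g f) = comp C _ _ _ (extension_hom Y Z g) (extension_hom X Y f).
Proof. intros. eapply IntSub_uniq; [apply IntSub_extension_hom| eapply IntSub_comp; apply IntSub_extension_hom]. Qed.

Lemma extension_ob_top : extension_ob (top FΣ') = top C.
Proof. eapply IntCtx_fun; [apply IntCtx_extension_ob| apply int_nil]. Qed.

Lemma extension_ty_sub : forall Δ Γ (B : Ty FΣ' Γ) (f : Hom FΣ' Δ Γ),
  extension_ty Δ (tysub FΣ' Δ Γ B f) = tysub C _ _ (extension_ty Γ B) (extension_hom Δ Γ f).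
Proof. intros. eapply IntTy_uniq; [apply IntTy_extension_ty| eapply IntTy_subst; [apply IntTy_extension_ty| apply IntSub_extension_hom]]. Qed.

Lemma extension_ob_ext : forall Γ B, extension_ob (ext FΣ' Γ B) = ext C (extension_ob Γ) (extension_ty Γ B).
Proof. intros. eapply IntCtx_fun; [apply IntCtx_extension_ob| apply int_ext; [apply IntCtx_extension_ob| apply IntTy_extension_ty]]. Qed.

Lemma existT_hom_tgt X X' Y (h : Hom C X Y) (h' : Hom C X' Y) :
  existT (fun X => {Y : Ob C & Hom C X Y}) X (existT _ Y h) = existT _ X' (existT _ Y h') ->
  existT (fun X => Hom C X Y) X h = existT _ X' h'.
Proof. intros e. inv_existT e. subst. inv_existT e. subst. reflexivity. Qed.

Lemma extension_hom_pr : forall Γ B,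
  existT (fun X => Hom C X (extension_ob Γ)) (extension_ob (ext FΣ' Γ B)) (extension_hom _ _ (pr FΣ' Γ B))
  = existT (fun X => Hom C X (extension_ob Γ)) (ext C (extension_ob Γ) (extension_ty Γ B)) (pr C (extension_ob Γ) (extension_ty Γ B)).
Proof.
  intros. apply existT_hom_tgt. eapply IntSub_fun; [apply IntSub_extension_hom|]. simpl. apply IntSub_pr. apply IntTy_extension_ty.
Qed.

Lemma extension_tm_sub : forall Δ Γ B (a : Tm FΣ' Γ B) (f : Hom FΣ' Δ Γ),
  existT (Tm C (extension_ob Δ)) _ (extension_tm Δ _ (tmsub FΣ' Δ Γ B a f))
  = existT (Tm C (extension_ob Δ)) _ (tmsub C _ _ _ (extension_tm Γ B a) (extension_hom Δ Γ f)).
Proof.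
  intros. pose proof (IntTm_fun _ _ _ _ _ _ _ _ (IntTm_extension_tm _ _ (tmsub FΣ' Δ Γ B a f))
     (IntTm_subst _ _ _ _ _ _ _ _ _ (IntTm_extension_tm _ _ a) (IntSub_extension_hom _ _ f))) as K.
  inv_existT K. exact K.
Qed.

Lemma extension_tm_var : forall Γ B,
  existT (fun X => {T : Ty C X & Tm C X T}) (extension_ob (ext FΣ' Γ B))
         (existT (Tm C (extension_ob (ext FΣ' Γ B))) _ (extension_tm _ _ (var FΣ' Γ B)))
  = existT (fun X => {T : Ty C X & Tm C X T}) (ext C (extension_ob Γ) (extension_ty Γ B))
         (existT (Tm C (ext C (extension_ob Γ) (extension_ty Γ B))) _ (var C (extension_ob Γ) (extension_ty Γ B))).
Proof.
  intros. eapply IntTm_fun; [apply IntTm_extension_tm|]. simpl. apply int_var_last. apply IntTy_extension_ty.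
Qed.

Lemma extension_hom_pair : forall Δ Γ B (f : Hom FΣ' Δ Γ) (a : Tm FΣ' Δ (tysub FΣ' Δ Γ B f)),
  existT (fun X => Hom C (extension_ob Δ) X) (extension_ob (ext FΣ' Γ B)) (extension_hom _ _ (pair FΣ' Δ Γ B f a))
  = existT (fun X => Hom C (extension_ob Δ) X) (ext C (extension_ob Γ) (extension_ty Γ B))
      (pair C _ _ (extension_ty Γ B) (extension_hom Δ Γ f)
         (eq_rect _ (Tm C (extension_ob Δ)) (extension_tm Δ _ a) _ (extension_ty_sub Δ Γ B f))).
Proof.
  intros. pose proof (IntSub_fun _ _ _ _ _ _ _ _ _ (IntSub_extension_hom _ _ (pair FΣ' Δ Γ B f a))
    (int_sub_snoc _ _ _ _ _ _ _ _ _ _ (IntSub_extension_hom _ _ f) (IntTy_extension_ty _ B) (IntTm_cast _ _ _ _ _ _ (extension_ty_sub Δ Γ B f) (IntTm_extension_tm _ _ a)))) as K.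
  inv_existT K. exact K.
Qed.

Definition extension : CwfMor FΣ' C :=
  Build_CwfMor FΣ' C extension_ob extension_hom extension_hom_id extension_hom_comp extension_ob_top extension_ty extension_ty_sub extension_ob_ext extension_hom_pr extension_tm extension_tm_sub extension_tm_var extension_hom_pair.

Lemma extension_tracked : tracks Σ' HΣ' extension.
Proof.
  split; [|split; [|split]].
  - intros Γ p. apply (IntCtx_extension_ob (exist _ Γ p)).
  - intros Γ p B q. apply (IntTy_extension_ty (exist _ Γ p) (exist _ B q)).
  - intros Γ p B q t r. apply (IntTm_extension_tm (exist _ Γ p) (exist _ B q) (exist _ t r)).
  - intros Δ pΔ Γ pΓ a m. apply (IntSub_extension_hom (exist _ Δ pΔ) (exist _ Γ pΓ) (exist _ a m)).
Qed.

Definition embed : CwfMor (F_Sigma Σ HΣ) FΣ' := embedding Σ Σ' HΣ HΣ' (sigma_ext_incl Σ ΓS S).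

Lemma extension_after_embedding : cwf_mor_comp extension embed = G.
Proof.
  pose (inc := sigma_ext_incl Σ ΓS S).
  apply tracked_mor_eq; [|apply G_tracked].
  destruct extension_tracked as (P1 & P2 & P3 & P4).
  split; [|split; [|split]].
  - intros Γ p. exact (P1 Γ (Ctx_weaken _ _ inc _ p)).
  - intros Γ p B q. exact (P2 Γ (Ctx_weaken _ _ inc _ p) B (IsTy_weaken _ _ inc _ _ q)).
  - intros Γ p B q t r.
    exact (P3 Γ (Ctx_weaken _ _ inc _ p) B (IsTy_weaken _ _ inc _ _ q) t (HasTy_weaken _ _ inc _ _ _ r)).
  - intros Δ pΔ Γ pΓ a m.
    exact (P4 Δ (Ctx_weaken _ _ inc _ pΔ) Γ (Ctx_weaken _ _ inc _ pΓ) a (ctxmap_weaken _ _ inc _ _ _ m)).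
Qed.

Lemma extension_on_new_type :
  existT (Ty C) (Fo extension (GammaS_obj Σ ΓS S HΓS)) (sg extension (S_OV_ty Σ ΓS S HΓS))
  = existT (Ty C) (Fo G (exist (fun Γ => Ctx Σ Γ) ΓS HΓS)) A.
Proof.
  destruct G_tracked as (GM1 & _).
  pose proof (int_new_ty _ _ _ _ (IntSub_id _ _ (GM1 ΓS HΓS))) as K.
  rewrite tysub_id in K.
  eapply IntTy_fun; [|exact K]. apply (IntTy_extension_ty (GammaS_obj Σ ΓS S HΓS) (S_OV_ty Σ ΓS S HΓS)).
Qed.

Lemma tracks_of_extension_conditions (G' : CwfMor FΣ' C) :
  cwf_mor_comp G' embed = G ->
  existT (Ty C) (Fo G' (GammaS_obj Σ ΓS S HΓS)) (sg G' (S_OV_ty Σ ΓS S HΓS))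
  = existT (Ty C) (Fo G (exist (fun Γ => Ctx Σ Γ) ΓS HΓS)) A ->
  tracks Σ' HΣ' G'.
Proof.
  pose (inc := sigma_ext_incl Σ ΓS S).
  intros Hc Hs. apply (tracks_of_generic Σ' HΣ' (fun d h => h) G').
  - intros Γ T p0 q0 p q sT.
    pose proof (f_equal (fun M : CwfMor (F_Sigma Σ HΣ) C =>
       existT (Ty C) (Fo M (exist _ Γ p)) (@sg _ _ M (exist _ Γ p) (exist (fun b => IsTy Σ Γ b) _ q))) Hc) as K.
    rewrite (proof_irrelevance _ p0 (Ctx_weaken _ _ inc _ p)),
            (proof_irrelevance _ q0 (IsTy_weaken _ _ inc _ _ q)).
    exact K.
  - intros p0 q0 _.
    rewrite (proof_irrelevance _ p0 (Ctx_weaken _ _ inc _ HΓS)),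
            (proof_irrelevance _ q0 (S_OV_type Σ ΓS S HΓS)).
    exact Hs.
  - intros Γ f U p0 q0 r0 p q r sF.
    pose proof (f_equal (fun M : CwfMor (F_Sigma Σ HΣ) C =>
       existT (fun X => {T : Ty C X & Tm C X T}) (Fo M (exist _ Γ p))
         (existT _ (@sg _ _ M (exist _ Γ p) (exist (fun b => IsTy Σ Γ b) U q))
            (@th _ _ M (exist _ Γ p) (exist (fun b => IsTy Σ Γ b) U q)
               (exist (fun x => HasTy Σ Γ x U) (App f (OV Γ)) r)))) Hc) as K.
    rewrite (proof_irrelevance _ p0 (Ctx_weaken _ _ inc _ p)),
            (proof_irrelevance _ q0 (IsTy_weaken _ _ inc _ _ q)),
            (proof_irrelevance _ r0 (HasTy_weaken _ _ inc _ _ _ r)).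
    exact K.
Qed.

Lemma extension_unique (G' : CwfMor FΣ' C) :
  cwf_mor_comp G' embed = G ->
  existT (Ty C) (Fo G' (GammaS_obj Σ ΓS S HΓS)) (sg G' (S_OV_ty Σ ΓS S HΓS))
  = existT (Ty C) (Fo G (exist (fun Γ => Ctx Σ Γ) ΓS HΓS)) A ->
  extension = G'.
Proof.
  intros HG HA. apply tracked_mor_eq.
  - apply extension_tracked.
  - apply tracks_of_extension_conditions; assumption.
Qed.

End Interpretation.

Theorem mainTheorem14 (C : Cwf) (Σ : Decl -> Prop) (HΣ : is_signature Σ)
  (G : CwfMor (F_Sigma Σ HΣ) C) (S : nat) (ΓS : ctx)
  (HS : forall Γ, ~ Σ (DTy Γ S)) (HΓS : Ctx Σ ΓS)
  (A : Ty C (Fo G (exist (fun Γ => Ctx Σ Γ) ΓS HΓS))) :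
  exists! G' : CwfMor (F_Sigma (sigma_ext Σ ΓS S) (sigma_ext_signature Σ ΓS S HΣ HS HΓS)) C,
    cwf_mor_comp G'
      (embedding Σ (sigma_ext Σ ΓS S) HΣ (sigma_ext_signature Σ ΓS S HΣ HS HΓS)
         (sigma_ext_incl Σ ΓS S)) = G /\
    existT (Ty C) (Fo G' (GammaS_obj Σ ΓS S HΓS)) (sg G' (S_OV_ty Σ ΓS S HΓS))
    = existT (Ty C) (Fo G (exist (fun Γ => Ctx Σ Γ) ΓS HΓS)) A.
Proof.
  exists (extension C Σ HΣ G S ΓS HS HΓS A).
  split; [split|].
  - apply extension_after_embedding.
  - apply extension_on_new_type.
  - intros G' [HG HA]. exact (extension_unique _ _ _ _ _ _ _ _ _ G' HG HA).
Qed.
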